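(* Let $u_0\in H^s(\mathbb R)$ with $s$ large enough that the quantities below are finite, $T>0$, $c>0$. For every $\theta\in[0,1]$, $\Delta t>0$, $\Delta x>0$, every $n\in\{0,\dots,N-1\}$, every $\gamma\in[0,\frac12)$ and $\sigma\in\{0,1\}$, $$\begin{aligned}\|\mathcal A_\theta e^{n+1}\|^2_{\ell^2_\Delta}\le{}&\|\mathcal A_\theta e^{n}\|^2_{\ell^2_\Delta}+\Delta tA_a\|e^n\|^2_{\ell^2_\Delta}+\Delta t\|\mathcal A_{-(1-\theta)}e^n\|^2_{\ell^2_\Delta}+\Delta t\|\epsilon^n\|^2_{\ell^2_\Delta}\Big\{1+4\frac{\Delta t}{\Delta x}+\Delta t\Big\}\\&+\Delta t\langle A_b,[D_+(e)^n]^2\rangle+\Delta t^2A_c\|D(e)^n\|^2_{\ell^2_\Delta}+\Delta tA_d\|D_+D_-(e)^n\|^2_{\ell^2_\Delta}\\&+\Delta tA_e\|D_+D(e)^n\|^2_{\ell^2_\Delta}+\Delta tA_f\|D_+D_+D_-(e)^n\|^2_{\ell^2_\Delta},\end{aligned}$$ where, writing $U=\|[u_\Delta]^n\|_{\ell^\infty}$, $U_+=\|D_+([u_\Delta])^n\|_{\ell^\infty}$, $U_-=\|D_-([u_\Delta])^n\|_{\ell^\infty}$, $E=\|e^n\|_{\ell^\infty}$, $X=\Delta x^{\frac12-\gamma}+E+9E^2\Delta x^{\gamma-\frac12}$ and $\mathbf 1=(1,1,\dots)$, $$A_a=U^2+U_+\Big(2-\theta+\frac{\Delta t}{\Delta x}\Big[2c+\frac23E+\frac32U\Big]\Big)+\frac{\Delta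 t^2}{\Delta x^2}U_+^2+\frac{\Delta t}{\Delta x}(U^2+2c^2),$$ $$A_b=\Big(\frac{\Delta x}{6}D_+(e)^n-c\mathbf 1\Big)(\Delta x-c\Delta t)+(1-\theta)\Delta t\,U_+^{2-\sigma}\mathbf 1,$$ $$A_c=E^2[1+\Delta x]+U^2-c^2+2EU+\frac{2c}{3}E,\qquad A_d=(1-\theta)\Delta t\Big[U_+^{\sigma}+\frac{\Delta x}{2}U_-\Big],$$ $$A_e=2(1-\theta)\Delta t\Big\{U+E+\frac X2\Big\}-\Delta x,$$ $$A_f=\Delta t\Big\{(1-2\theta)+\frac{(1-\theta)\Delta x^2}{2}\Big[c+\frac X2\Big]+\Delta t(1-\theta)U_+\Big\}-\frac{\Delta x^3}{4}.$$
   Context: KdV equation $\partial_t u+\partial_x(u^2/2)+\partial_x^3u=0$ with datum $u_0$ and exact solution $u$. $t^n=n\Delta t$, $x_j=j\Delta x$, $N=\lfloor T/\Delta t\rfloor$. For sequences: $D_+(a)_j=(a_{j+1}-a_j)/\Delta x$, $D_-(a)_j=(a_j-a_{j-1})/\Delta x$, $D=\frac12(D_++D_-)$; products and powers are componentwise; $\langle a,b\rangle=\Delta x\sum_ja_jb_j$, $\|a\|_{\ell^2_\Delta}=\langle a,a\rangle^{1/2}$, $\|a\|_{\ell^\infty}=\sup_j|a_j|$. For $\alpha\in\mathbb R$, $\mathcal A_\alpha=I+\alpha\Delta t D_+D_+D_-$ on $\ell^2_\Delta(\mathbb Z)$. Scheme with parameters $c,\theta$: $\frac{v^{n+1}_j-v^n_j}{\Delta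 t}+D(\frac{v^2}{2})^n_j+\theta D_+D_+D_-(v)^{n+1}_j+(1-\theta)D_+D_+D_-(v)^n_j=\frac{c\Delta x}{2}D_+D_-(v)^n_j$, with $v^0_j=\frac1{\Delta x}\int_{x_j}^{x_{j+1}}u_0$. Averaged exact solution $[u_\Delta]^0_j=\frac1{\Delta x}\int_{x_j}^{x_{j+1}}u_0$, $[u_\Delta]^n_j=\frac{1}{\Delta x(\min(t^{n+1},T)-t^n)}\int_{t^n}^{\min(t^{n+1},T)}\int_{x_j}^{x_{j+1}}u\,dy\,ds$ for $n\ge1$. Error $e^n_j=v^n_j-[u_\Delta]^n_j$. Consistency error $\epsilon^n_j=\frac{[u_\Delta]^{n+1}_j-[u_\Delta]^n_j}{\Delta t}+D(\frac{[u_\Delta]^2}{2})^n_j+\theta D_+D_+D_-([u_\Delta])^{n+1}_j+(1-\theta)D_+D_+D_-([u_\Delta])^n_j-\frac{c\Delta x}{2}D_+D_-([u_\Delta])^n_j$. *)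

From Stdlib Require Import Reals ZArith.
From Coquelicot Require Import Coquelicot.
Open Scope R_scope.

Definition seqZ := Z -> R.

Definition sumZ (a : seqZ) : R :=
  Series (fun k : nat => a (Z.of_nat k)) +
  Series (fun k : nat => a (- Z.of_nat (S k))%Z).

Definition l2Z (a : seqZ) : Prop :=
  ex_series (fun k : nat => (a (Z.of_nat k)) ^ 2) /\
  ex_series (fun k : nat => (a (- Z.of_nat (S k))%Z) ^ 2).

Definition ipD (dx : R) (a b : seqZ) : R := dx * sumZ (fun j => a j * b j).
Definition normD (dx : R) (a : seqZ) : R := sqrt (ipD dx a a).

Definition linf (a : seqZ) : R :=
  real (Lub_Rbar (fun r => exists j : Z, r = Rabs (a j))).

Definition sqZ (a : seqZ) : seqZ := fun j => a j ^ 2.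

Definition Dp (dx : R) (a : seqZ) : seqZ := fun j => (a (j + 1)%Z - a j) / dx.
Definition Dm (dx : R) (a : seqZ) : seqZ := fun j => (a j - a (j - 1)%Z) / dx.
Definition Dc (dx : R) (a : seqZ) : seqZ := fun j => (Dp dx a j + Dm dx a j) / 2.
Definition D3 (dx : R) (a : seqZ) : seqZ := Dp dx (Dp dx (Dm dx a)).

Definition Aop (alpha dt dx : R) (a : seqZ) : seqZ :=
  fun j => a j + alpha * dt * D3 dx a j.

Definition xg (dx : R) (j : Z) : R := IZR j * dx.
Definition tg (dt : R) (n : nat) : R := INR n * dt.

Definition Nsteps (T dt : R) : nat := Z.to_nat (Int_part (T / dt)).

Definition KdV_solution (u0 : R -> R) (T : R) (u : R -> R -> R) : Prop :=
  (forall x, u 0 x = u0 x) /\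
  (forall t x, 0 <= t <= T ->
     continuous (fun p : R * R => u (Rmax 0 (Rmin T (fst p))) (snd p)) (t, x)) /\
  (forall t x, 0 < t < T ->
     ex_derive (fun s => u s x) t /\
     ex_derive (fun y => u t y ^ 2 / 2) x /\
     ex_derive_n (fun y => u t y) 3 x /\
     Derive (fun s => u s x) t + Derive (fun y => u t y ^ 2 / 2) x
       + Derive_n (fun y => u t y) 3 x = 0).

Definition uavg (u0 : R -> R) (u : R -> R -> R) (T dt dx : R) (n : nat) : seqZ :=
  fun j =>
  match n with
  | O => / dx * RInt u0 (xg dx j) (xg dx (j + 1))
  | S _ =>
      / (dx * (Rmin (tg dt (S n)) T - tg dt n)) *
      RInt (fun s => RInt (fun y => u s y) (xg dx j) (xg dx (j + 1)))
           (tg dt n) (Rmin (tg dt (S n)) T)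
  end.

Definition scheme_solution (c theta dt dx : R) (u0 : R -> R) (v : nat -> seqZ) : Prop :=
  (forall j, v O j = / dx * RInt u0 (xg dx j) (xg dx (j + 1))) /\
  (forall n, l2Z (v n)) /\
  (forall n j,
     (v (S n) j - v n j) / dt + Dc dx (fun k => v n k ^ 2 / 2) j
     + theta * D3 dx (v (S n)) j + (1 - theta) * D3 dx (v n) j
     = c * dx / 2 * Dp dx (Dm dx (v n)) j).

Definition err (v : nat -> seqZ) (ua : nat -> seqZ) (n : nat) : seqZ :=
  fun j => v n j - ua n j.

Definition cons_err (c theta dt dx : R) (ua : nat -> seqZ) (n : nat) : seqZ :=
  fun j =>
    (ua (S n) j - ua n j) / dt + Dc dx (fun k => ua n k ^ 2 / 2) j
    + theta * D3 dx (ua (S n)) j + (1 - theta) * D3 dx (ua n) j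
    - c * dx / 2 * Dp dx (Dm dx (ua n)) j.

(* Energy method.  By the scheme and the definition of the consistency error, the error satisfies
     A_theta e^{n+1} = A_{-(1-theta)} e^n - dt (D(u e + e^2/2) - c dx/2 D+D- e + eps^n),
   with u = [u_Delta]^n and e = e^n.  Squaring and summing over the grid, every cross term is
   rewritten by summation by parts (each identity is a telescoping sum) and bounded with Young's
   inequality and the l^infty bounds U, U+, U-, E; the quartic term (D+ e)^4 is controlled by the
   discrete Gagliardo-Nirenberg inequality sum (D+ e)^4 <= 9 E^2 sum (D+D- e)^2, and the Young
   weight lambda = dx^(1/2 - gamma) spent on it is what produces X.  The argument is purely
   discrete. *)

From Stdlib Require Import Reals ZArith Lra Psatz Lia.
From Coquelicot Require Import Coquelicot.
Open Scope R_scope.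

Lemma ex_series_Rabs_le (a b : nat -> R) :
  (forall n, Rabs (a n) <= b n) -> ex_series b -> ex_series a.
Proof. intros; apply (ex_series_le a b); auto. Qed.

Lemma Series_ge_0 (a : nat -> R) : ex_series a -> (forall n, 0 <= a n) -> 0 <= Series a.
Proof.
  intros Ha Hpos.
  assert (Hzero : Series (fun _ => 0) = 0).
  { rewrite (Series_ext _ (fun n => 0 * a n)) by (intros; ring).
    rewrite Series_scal_l; ring. }
  rewrite <- Hzero; apply Series_le; auto; intros n; split; [lra | auto].
Qed.

Lemma Series_le_Series (a b : nat -> R) :
  ex_series a -> ex_series b -> (forall n, a n <= b n) -> Series a <= Series b.
Proof.
  intros Ha Hb Hab.
  assert (Hdiff : 0 <= Series (fun n => b n - a n)).
  { apply Series_ge_0.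
    - apply (ex_series_minus b a); auto.
    - intros n; specialize (Hab n); lra. }
  rewrite Series_minus in Hdiff by auto; lra.
Qed.

Lemma Series_ge_term (a : nat -> R) (n : nat) :
  ex_series a -> (forall k, 0 <= a k) -> a n <= Series a.
Proof.
  intros Ha Hpos.
  rewrite (Series_incr_n a (S n)) by (lia || auto); simpl Init.Nat.pred.
  assert (Htail : 0 <= Series (fun k => a (S n + k)%nat)).
  { apply Series_ge_0; auto; apply (ex_series_incr_n a (S n)); auto. }
  assert (Hpartial : a n <= sum_f_R0 a n).
  { destruct n as [|n]; simpl; [lra|].
    pose proof (cond_pos_sum a n Hpos); lra. }
  lra.
Qed.

(** * Summable and square-summable sequences over Z *)

Definition summableZ (a : seqZ) : Prop :=
  ex_series (fun k => Rabs (a (Z.of_nat k))) /\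
  ex_series (fun k => Rabs (a (- Z.of_nat (S k))%Z)).

Lemma summableZ_ex_series (a : seqZ) : summableZ a ->
  ex_series (fun k => a (Z.of_nat k)) /\ ex_series (fun k => a (- Z.of_nat (S k))%Z).
Proof. intros [H1 H2]; split; apply ex_series_Rabs; auto. Qed.

Lemma summableZ_dominated (a b : seqZ) :
  (forall j, Rabs (b j) <= a j) -> summableZ a -> summableZ b.
Proof.
  intros Hba [H1 H2]; split.
  - apply (ex_series_Rabs_le _ (fun k => Rabs (a (Z.of_nat k)))); auto.
    intros k; rewrite Rabs_Rabsolu.
    eapply Rle_trans; [apply Hba | apply Rle_abs].
  - apply (ex_series_Rabs_le _ (fun k => Rabs (a (- Z.of_nat (S k))%Z))); auto.
    intros k; rewrite Rabs_Rabsolu.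
    eapply Rle_trans; [apply Hba | apply Rle_abs].
Qed.

Lemma summableZ_abs (a : seqZ) : summableZ a -> summableZ (fun j => Rabs (a j)).
Proof.
  intros [H1 H2]; split;
    [eapply ex_series_ext; [|exact H1] | eapply ex_series_ext; [|exact H2]];
    intros; rewrite Rabs_Rabsolu; reflexivity.
Qed.

Lemma summableZ_le_abs (a b : seqZ) :
  (forall j, Rabs (b j) <= Rabs (a j)) -> summableZ a -> summableZ b.
Proof.
  intros Hba Ha; apply (summableZ_dominated (fun j => Rabs (a j))); auto.
  apply summableZ_abs; auto.
Qed.

Lemma summableZ_ext (a b : seqZ) : (forall j, a j = b j) -> summableZ a -> summableZ b.
Proof. intros Hab; apply summableZ_le_abs; intros j; rewrite Hab; lra. Qed.

Lemma summableZ_plus (a b : seqZ) : summableZ a -> summableZ b -> summableZ (fun j => a j + b j).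
Proof.
  intros [A1 A2] [B1 B2].
  apply (summableZ_dominated (fun j => Rabs (a j) + Rabs (b j))); [intros; apply Rabs_triang|].
  assert (Hnonneg : forall j, Rabs (Rabs (a j) + Rabs (b j)) = Rabs (a j) + Rabs (b j))
    by (intros; apply Rabs_pos_eq, Rplus_le_le_0_compat; apply Rabs_pos).
  split.
  - apply (ex_series_Rabs_le _ (fun k => Rabs (a (Z.of_nat k)) + Rabs (b (Z.of_nat k)))).
    + intros; cbv beta; rewrite Rabs_Rabsolu, Hnonneg; lra.
    + exact (ex_series_plus _ _ A1 B1).
  - apply (ex_series_Rabs_le _
      (fun k => Rabs (a (- Z.of_nat (S k))%Z) + Rabs (b (- Z.of_nat (S k))%Z))).
    + intros; cbv beta; rewrite Rabs_Rabsolu, Hnonneg; lra.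
    + exact (ex_series_plus _ _ A2 B2).
Qed.

Lemma summableZ_scal (c : R) (a : seqZ) : summableZ a -> summableZ (fun j => c * a j).
Proof.
  intros [A1 A2]; split.
  - apply (ex_series_Rabs_le _ (fun k => Rabs c * Rabs (a (Z.of_nat k)))).
    + intros; rewrite Rabs_Rabsolu, Rabs_mult; lra.
    + exact (ex_series_scal_l _ _ A1).
  - apply (ex_series_Rabs_le _ (fun k => Rabs c * Rabs (a (- Z.of_nat (S k))%Z))).
    + intros; rewrite Rabs_Rabsolu, Rabs_mult; lra.
    + exact (ex_series_scal_l _ _ A2).
Qed.

Lemma summableZ_opp (a : seqZ) : summableZ a -> summableZ (fun j => - a j).
Proof.
  intros Ha; apply (summableZ_ext (fun j => -1 * a j)); [intros; ring | apply summableZ_scal; auto].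
Qed.

Lemma summableZ_minus (a b : seqZ) : summableZ a -> summableZ b -> summableZ (fun j => a j - b j).
Proof. intros; apply summableZ_plus; auto; apply summableZ_opp; auto. Qed.

Lemma summableZ_succ (a : seqZ) : summableZ a -> summableZ (fun j => a (j + 1)%Z).
Proof.
  intros [A1 A2]; split.
  - apply ex_series_incr_1 in A1.
    eapply ex_series_ext; [|exact A1]; intros k; cbv beta; do 2 f_equal; rewrite ?Nat2Z.inj_succ; lia.
  - assert (H : ex_series (fun k => Rabs (a (- Z.of_nat k)%Z))) by (apply ex_series_incr_1; exact A2).
    eapply ex_series_ext; [|exact H]; intros k; cbv beta; do 2 f_equal; rewrite ?Nat2Z.inj_succ; lia.
Qed.

Lemma summableZ_pred (a : seqZ) : summableZ a -> summableZ (fun j => a (j - 1)%Z).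
Proof.
  intros [A1 A2]; split.
  - apply ex_series_incr_1.
    eapply ex_series_ext; [|exact A1]; intros k; cbv beta; do 2 f_equal; rewrite ?Nat2Z.inj_succ; lia.
  - apply ex_series_incr_1 in A2.
    eapply ex_series_ext; [|exact A2]; intros k; cbv beta; do 2 f_equal; rewrite ?Nat2Z.inj_succ; lia.
Qed.

Lemma summableZ_translate_nat (a : seqZ) (n : nat) : summableZ a ->
  summableZ (fun j => a (j + Z.of_nat n)%Z) /\ summableZ (fun j => a (j - Z.of_nat n)%Z).
Proof.
  intros Ha; induction n as [|n [IHp IHm]].
  - split; eapply summableZ_ext; try exact Ha; intros j; simpl; f_equal; lia.
  - split.
    + apply summableZ_succ in IHp; eapply summableZ_ext; [|exact IHp].
      intros j; cbv beta; f_equal; lia.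
    + apply summableZ_pred in IHm; eapply summableZ_ext; [|exact IHm].
      intros j; cbv beta; f_equal; lia.
Qed.

Lemma summableZ_translate (a : seqZ) (f : Z -> Z) :
  summableZ a -> (forall j, f j = (j + f 0%Z)%Z) -> summableZ (fun j => a (f j)).
Proof.
  intros Ha Hf; destruct (Z_le_gt_dec 0 (f 0%Z)).
  - destruct (summableZ_translate_nat a (Z.to_nat (f 0%Z)) Ha) as [H _].
    eapply summableZ_ext; [|exact H]; intros j; cbv beta; f_equal; rewrite (Hf j); lia.
  - destruct (summableZ_translate_nat a (Z.to_nat (- f 0%Z)) Ha) as [_ H].
    eapply summableZ_ext; [|exact H]; intros j; cbv beta; f_equal; rewrite (Hf j); lia.
Qed.

Lemma sumZ_ext (a b : seqZ) : (forall j, a j = b j) -> sumZ a = sumZ b.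
Proof. intros H; unfold sumZ; f_equal; apply Series_ext; intros; apply H. Qed.

Lemma sumZ_plus (a b : seqZ) : summableZ a -> summableZ b ->
  sumZ (fun j => a j + b j) = sumZ a + sumZ b.
Proof.
  intros Ha Hb; apply summableZ_ex_series in Ha; apply summableZ_ex_series in Hb.
  destruct Ha, Hb; unfold sumZ; rewrite !Series_plus by auto; ring.
Qed.

Lemma sumZ_scal (c : R) (a : seqZ) : sumZ (fun j => c * a j) = c * sumZ a.
Proof. unfold sumZ; rewrite !Series_scal_l; ring. Qed.

Lemma sumZ_opp (a : seqZ) : sumZ (fun j => - a j) = - sumZ a.
Proof. unfold sumZ; rewrite !Series_opp; ring. Qed.

Lemma sumZ_minus (a b : seqZ) : summableZ a -> summableZ b ->
  sumZ (fun j => a j - b j) = sumZ a - sumZ b.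
Proof.
  intros; unfold Rminus; rewrite sumZ_plus, sumZ_opp; auto; apply summableZ_opp; auto.
Qed.

Lemma sumZ_le (a b : seqZ) : summableZ a -> summableZ b ->
  (forall j, a j <= b j) -> sumZ a <= sumZ b.
Proof.
  intros Ha Hb Hab; apply summableZ_ex_series in Ha; apply summableZ_ex_series in Hb.
  destruct Ha, Hb; unfold sumZ; apply Rplus_le_compat; apply Series_le_Series; auto.
Qed.

Lemma sumZ_ge_0 (a : seqZ) : summableZ a -> (forall j, 0 <= a j) -> 0 <= sumZ a.
Proof.
  intros Ha Hpos; apply summableZ_ex_series in Ha; destruct Ha.
  unfold sumZ; apply Rplus_le_le_0_compat; apply Series_ge_0; auto.
Qed.

Lemma sumZ_succ (a : seqZ) : summableZ a -> sumZ (fun j => a (j + 1)%Z) = sumZ a.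
Proof.
  intros Ha; apply summableZ_ex_series in Ha; destruct Ha as [A1 A2]; unfold sumZ.
  assert (A2' : ex_series (fun k => a (- Z.of_nat k)%Z)) by (apply ex_series_incr_1; exact A2).
  rewrite (Series_incr_1 (fun k => a (Z.of_nat k))) by auto.
  rewrite (Series_ext (fun k => a (Z.of_nat k + 1)%Z) (fun k => a (Z.of_nat (S k))))
    by (intros; f_equal; lia).
  rewrite (Series_ext (fun k => a (- Z.of_nat (S k) + 1)%Z) (fun k => a (- Z.of_nat k)%Z))
    by (intros; f_equal; lia).
  rewrite (Series_incr_1 (fun k => a (- Z.of_nat k)%Z)) by auto.
  simpl; ring.
Qed.

Lemma sumZ_le_telescope (A B T : seqZ) : summableZ A -> summableZ B -> summableZ T ->
  (forall j, A j <= B j + (T (j + 1)%Z - T j)) -> sumZ A <= sumZ B.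
Proof.
  intros HA HB HT H.
  assert (HT1 := summableZ_succ T HT).
  assert (HBT : summableZ (fun j => B j + (T (j + 1)%Z - T j)))
    by (apply summableZ_plus; auto; apply summableZ_minus; auto).
  eapply Rle_trans; [apply sumZ_le; [exact HA | exact HBT | exact H]|].
  rewrite sumZ_plus, sumZ_minus, sumZ_succ; auto; [lra | apply summableZ_minus; auto].
Qed.

Lemma sumZ_eq_telescope (A B T : seqZ) : summableZ A -> summableZ B -> summableZ T ->
  (forall j, A j = B j + (T (j + 1)%Z - T j)) -> sumZ A = sumZ B.
Proof.
  intros HA HB HT H; apply Rle_antisym.
  - apply (sumZ_le_telescope A B T); auto; intros; rewrite H; lra.
  - apply (sumZ_le_telescope B A (fun j => - T j)); auto.
    + apply summableZ_opp; auto.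
    + intros; rewrite H; lra.
Qed.

Definition sq_summableZ (a : seqZ) : Prop := summableZ (fun j => a j ^ 2).
Definition boundedZ (a : seqZ) : Prop := exists M, forall j, Rabs (a j) <= M.

Lemma sq_summableZ_of_l2Z (a : seqZ) : l2Z a -> sq_summableZ a.
Proof.
  intros [H1 H2]; split;
    [eapply ex_series_ext; [|exact H1] | eapply ex_series_ext; [|exact H2]];
    intros; rewrite Rabs_pos_eq; auto; apply pow2_ge_0.
Qed.

Lemma sq_summableZ_bounded (a : seqZ) : sq_summableZ a -> boundedZ a.
Proof.
  intros [H1 H2].
  set (M := Series (fun k => Rabs (a (Z.of_nat k) ^ 2))
            + Series (fun k => Rabs (a (- Z.of_nat (S k))%Z ^ 2))).
  assert (P1 := Series_ge_0 _ H1 (fun k => Rabs_pos _)).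
  assert (P2 := Series_ge_0 _ H2 (fun k => Rabs_pos _)).
  exists (sqrt M); intros j.
  rewrite <- sqrt_Rsqr_abs; apply sqrt_le_1_alt; unfold Rsqr.
  replace (a j * a j) with (Rabs (a j ^ 2)) by (rewrite Rabs_pos_eq; [ring | apply pow2_ge_0]).
  destruct (Z_le_gt_dec 0 j).
  - pose proof (Series_ge_term _ (Z.to_nat j) H1 (fun k => Rabs_pos _)) as Hj.
    cbv beta in Hj; rewrite Z2Nat.id in Hj by lia; unfold M; lra.
  - pose proof (Series_ge_term _ (Z.to_nat (- j - 1)) H2 (fun k => Rabs_pos _)) as Hj.
    cbv beta in Hj; replace (- Z.of_nat (S (Z.to_nat (- j - 1))))%Z with j in Hj by lia.
    unfold M; lra.
Qed.

Lemma boundedZ_const (c : R) : boundedZ (fun _ => c).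
Proof. exists (Rabs c); intros; lra. Qed.

Lemma boundedZ_plus (a b : seqZ) : boundedZ a -> boundedZ b -> boundedZ (fun j => a j + b j).
Proof.
  intros [M HM] [N HN]; exists (M + N); intros j.
  eapply Rle_trans; [apply Rabs_triang|]; specialize (HM j); specialize (HN j); lra.
Qed.

Lemma boundedZ_opp (a : seqZ) : boundedZ a -> boundedZ (fun j => - a j).
Proof. intros [M HM]; exists M; intros j; rewrite Rabs_Ropp; auto. Qed.

Lemma boundedZ_minus (a b : seqZ) : boundedZ a -> boundedZ b -> boundedZ (fun j => a j - b j).
Proof. intros; apply boundedZ_plus; auto; apply boundedZ_opp; auto. Qed.

Lemma boundedZ_mult (a b : seqZ) : boundedZ a -> boundedZ b -> boundedZ (fun j => a j * b j).
Proof.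
  intros [M HM] [N HN]; exists (M * N); intros j; rewrite Rabs_mult.
  apply Rmult_le_compat; auto using Rabs_pos.
Qed.

Lemma boundedZ_pow (a : seqZ) (n : nat) : boundedZ a -> boundedZ (fun j => a j ^ n).
Proof.
  intros Ha; induction n as [|n IH]; simpl.
  - apply boundedZ_const.
  - apply (boundedZ_mult a (fun j => a j ^ n)); auto.
Qed.

Lemma boundedZ_div (a b : seqZ) : boundedZ a -> boundedZ (fun j => / b j) ->
  boundedZ (fun j => a j / b j).
Proof. intros; apply boundedZ_mult; auto. Qed.

Lemma boundedZ_comp (a : seqZ) (f : Z -> Z) : boundedZ a -> boundedZ (fun j => a (f j)).
Proof. intros [M HM]; exists M; auto. Qed.

Lemma sq_summableZ_dominated (a b : seqZ) (M : R) :
  (forall j, b j ^ 2 <= M * a j ^ 2) -> sq_summableZ a -> sq_summableZ b.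
Proof.
  intros H Ha; apply (summableZ_dominated (fun j => Rabs M * a j ^ 2)).
  - intros j; rewrite Rabs_pos_eq by apply pow2_ge_0.
    eapply Rle_trans; [apply H|]; apply Rmult_le_compat_r; [apply pow2_ge_0 | apply Rle_abs].
  - apply summableZ_scal; auto.
Qed.

Lemma sq_summableZ_plus (a b : seqZ) : sq_summableZ a -> sq_summableZ b ->
  sq_summableZ (fun j => a j + b j).
Proof.
  intros Ha Hb; apply (summableZ_dominated (fun j => 2 * a j ^ 2 + 2 * b j ^ 2)).
  - intros j; rewrite Rabs_pos_eq by apply pow2_ge_0; pose proof (pow2_ge_0 (a j - b j)); nra.
  - apply summableZ_plus; apply summableZ_scal; auto.
Qed.

Lemma sq_summableZ_opp (a : seqZ) : sq_summableZ a -> sq_summableZ (fun j => - a j).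
Proof. apply sq_summableZ_dominated with (M := 1); intros; nra. Qed.

Lemma sq_summableZ_minus (a b : seqZ) : sq_summableZ a -> sq_summableZ b ->
  sq_summableZ (fun j => a j - b j).
Proof. intros; apply sq_summableZ_plus; auto; apply sq_summableZ_opp; auto. Qed.

Lemma sq_summableZ_mult_bounded (a b : seqZ) : sq_summableZ a -> boundedZ b ->
  sq_summableZ (fun j => a j * b j).
Proof.
  intros Ha [M HM]; apply (sq_summableZ_dominated a _ (M ^ 2)); auto.
  intros j; rewrite Rpow_mult_distr, Rmult_comm.
  apply Rmult_le_compat_r; [apply pow2_ge_0|].
  rewrite <- (pow2_abs (b j)); apply pow_incr; split; [apply Rabs_pos | apply HM].
Qed.

Lemma sq_summableZ_bounded_mult (a b : seqZ) : boundedZ a -> sq_summableZ b ->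
  sq_summableZ (fun j => a j * b j).
Proof.
  intros Ha Hb; eapply sq_summableZ_dominated with (M := 1);
    [|apply (sq_summableZ_mult_bounded b a Hb Ha)].
  intros; rewrite Rmult_comm; lra.
Qed.

Lemma sq_summableZ_div (a b : seqZ) : sq_summableZ a -> boundedZ (fun j => / b j) ->
  sq_summableZ (fun j => a j / b j).
Proof. intros; apply sq_summableZ_mult_bounded; auto. Qed.

Lemma sq_summableZ_pow (a : seqZ) (n : nat) : sq_summableZ a -> sq_summableZ (fun j => a j ^ S n).
Proof.
  intros Ha; apply (sq_summableZ_mult_bounded a (fun j => a j ^ n)); auto.
  apply boundedZ_pow, sq_summableZ_bounded; auto.
Qed.

Lemma sq_summableZ_translate (a : seqZ) (f : Z -> Z) : sq_summableZ a ->
  (forall j, f j = (j + f 0%Z)%Z) -> sq_summableZ (fun j => a (f j)).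
Proof. apply (summableZ_translate (fun j => a j ^ 2)). Qed.

Lemma summableZ_mult (a b : seqZ) : sq_summableZ a -> sq_summableZ b ->
  summableZ (fun j => a j * b j).
Proof.
  intros Ha Hb; apply (summableZ_dominated (fun j => a j ^ 2 + b j ^ 2)).
  - intros j; apply Rabs_le.
    pose proof (pow2_ge_0 (a j - b j)); pose proof (pow2_ge_0 (a j + b j)); split; nra.
  - apply summableZ_plus; auto.
Qed.

Lemma summableZ_bounded_mult (a b : seqZ) : boundedZ a -> summableZ b ->
  summableZ (fun j => a j * b j).
Proof.
  intros [M HM] Hb; apply (summableZ_le_abs (fun j => M * b j)).
  - intros j; rewrite !Rabs_mult; apply Rmult_le_compat_r; [apply Rabs_pos|].
    eapply Rle_trans; [exact (HM j) | apply Rle_abs].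
  - apply summableZ_scal; auto.
Qed.

Lemma summableZ_mult_bounded (a b : seqZ) : summableZ a -> boundedZ b ->
  summableZ (fun j => a j * b j).
Proof.
  intros Ha Hb; eapply summableZ_ext; [|apply (summableZ_bounded_mult b a Hb Ha)].
  intros; apply Rmult_comm.
Qed.

Lemma summableZ_div (a b : seqZ) : summableZ a -> boundedZ (fun j => / b j) ->
  summableZ (fun j => a j / b j).
Proof. intros; apply summableZ_mult_bounded; auto. Qed.

Lemma summableZ_pow (a : seqZ) (n : nat) : sq_summableZ a -> summableZ (fun j => a j ^ S (S n)).
Proof.
  intros Ha; apply (summableZ_ext (fun j => a j ^ 2 * a j ^ n)).
  - intros; rewrite <- pow_add; reflexivity.
  - apply summableZ_mult_bounded; auto; apply boundedZ_pow, sq_summableZ_bounded; auto.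
Qed.

Lemma sq_summableZ_Dp (h : R) (a : seqZ) : sq_summableZ a -> sq_summableZ (Dp h a).
Proof.
  intros; apply (sq_summableZ_div (fun j => a (j + 1)%Z - a j) (fun _ => h)); [|apply boundedZ_const].
  apply sq_summableZ_minus; auto.
  apply (sq_summableZ_translate a (fun j => (j + 1)%Z)); auto; intros; lia.
Qed.

Lemma sq_summableZ_Dm (h : R) (a : seqZ) : sq_summableZ a -> sq_summableZ (Dm h a).
Proof.
  intros; apply (sq_summableZ_div (fun j => a j - a (j - 1)%Z) (fun _ => h)); [|apply boundedZ_const].
  apply sq_summableZ_minus; auto.
  apply (sq_summableZ_translate a (fun j => (j - 1)%Z)); auto; intros; lia.
Qed.

Lemma sq_summableZ_Dc (h : R) (a : seqZ) : sq_summableZ a -> sq_summableZ (Dc h a).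
Proof.
  intros; apply (sq_summableZ_div (fun j => Dp h a j + Dm h a j) (fun _ => 2)); [|apply boundedZ_const].
  apply sq_summableZ_plus; [apply sq_summableZ_Dp | apply sq_summableZ_Dm]; auto.
Qed.

Lemma sq_summableZ_D3 (h : R) (a : seqZ) : sq_summableZ a -> sq_summableZ (D3 h a).
Proof. intros; apply sq_summableZ_Dp, sq_summableZ_Dp, sq_summableZ_Dm; auto. Qed.

Lemma sq_summableZ_Aop (alpha dt h : R) (a : seqZ) : sq_summableZ a ->
  sq_summableZ (Aop alpha dt h a).
Proof.
  intros; apply sq_summableZ_plus; auto.
  apply (sq_summableZ_bounded_mult (fun _ => alpha * dt) (D3 h a));
    [apply boundedZ_const | apply sq_summableZ_D3; auto].
Qed.

Create HintDb sq_summable.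

Ltac solve_translation := intros; cbv beta; simpl; lia.

Ltac solve_boundedZ :=
  cbv beta;
  match goal with
  | |- boundedZ (fun _ => ?c) => apply boundedZ_const
  | |- boundedZ (fun j => @?A j + @?B j) => apply (boundedZ_plus A B); solve_boundedZ
  | |- boundedZ (fun j => @?A j - @?B j) => apply (boundedZ_minus A B); solve_boundedZ
  | |- boundedZ (fun j => - @?A j) => apply (boundedZ_opp A); solve_boundedZ
  | |- boundedZ (fun j => @?A j * @?B j) => apply (boundedZ_mult A B); solve_boundedZ
  | |- boundedZ (fun j => @?A j / @?B j) => apply (boundedZ_div A B); solve_boundedZ
  | |- boundedZ (fun j => @?A j ^ ?n) => apply (boundedZ_pow A n); solve_boundedZ
  | |- boundedZ (fun j => ?F (@?f j)) => apply (boundedZ_comp F f); solve_boundedZ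
  | |- boundedZ ?F => first [assumption | apply sq_summableZ_bounded; solve_sq_summableZ]
  end
with solve_sq_summableZ :=
  cbv beta;
  match goal with
  | |- sq_summableZ (fun j => @?A j + @?B j) => apply (sq_summableZ_plus A B); solve_sq_summableZ
  | |- sq_summableZ (fun j => @?A j - @?B j) => apply (sq_summableZ_minus A B); solve_sq_summableZ
  | |- sq_summableZ (fun j => - @?A j) => apply (sq_summableZ_opp A); solve_sq_summableZ
  | |- sq_summableZ (fun j => @?A j * @?B j) =>
      first [ apply (sq_summableZ_mult_bounded A B); [solve_sq_summableZ | solve_boundedZ]
            | apply (sq_summableZ_bounded_mult A B); [solve_boundedZ | solve_sq_summableZ] ]
  | |- sq_summableZ (fun j => @?A j / @?B j) =>
      apply (sq_summableZ_div A B); [solve_sq_summableZ | solve_boundedZ]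
  | |- sq_summableZ (fun j => @?A j ^ S ?n) => apply (sq_summableZ_pow A n); solve_sq_summableZ
  | |- sq_summableZ (fun j => ?F (@?f j)) =>
      apply (sq_summableZ_translate F f); [solve_sq_summableZ | solve_translation]
  | |- sq_summableZ (Dc ?h ?X) => apply (sq_summableZ_Dc h X); solve_sq_summableZ
  | |- sq_summableZ (Dp ?h ?X) => apply (sq_summableZ_Dp h X); solve_sq_summableZ
  | |- sq_summableZ (Dm ?h ?X) => apply (sq_summableZ_Dm h X); solve_sq_summableZ
  | |- sq_summableZ (D3 ?h ?X) => apply (sq_summableZ_D3 h X); solve_sq_summableZ
  | |- sq_summableZ (Aop ?al ?t ?h ?X) => apply (sq_summableZ_Aop al t h X); solve_sq_summableZ
  | |- sq_summableZ ?F => first [assumption | solve [eauto with sq_summable]]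
  end.

Ltac solve_summableZ :=
  cbv beta;
  match goal with
  | |- summableZ (fun j => @?A j + @?B j) => apply (summableZ_plus A B); solve_summableZ
  | |- summableZ (fun j => @?A j - @?B j) => apply (summableZ_minus A B); solve_summableZ
  | |- summableZ (fun j => - @?A j) => apply (summableZ_opp A); solve_summableZ
  | |- summableZ (fun j => @?A j ^ 2) => change (sq_summableZ A); solve_sq_summableZ
  | |- summableZ (fun j => @?A j ^ S (S ?n)) => apply (summableZ_pow A n); solve_sq_summableZ
  | |- summableZ (fun j => @?A j * @?B j) =>
      first [ apply (summableZ_mult A B); solve_sq_summableZ
            | apply (summableZ_bounded_mult A B); [solve_boundedZ | solve_summableZ]
            | apply (summableZ_mult_bounded A B); [solve_summableZ | solve_boundedZ] ]
  | |- summableZ (fun j => @?A j / @?B j) =>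
      apply (summableZ_div A B); [solve_summableZ | solve_boundedZ]
  | |- summableZ (fun j => ?F (@?f j)) =>
      apply (summableZ_translate F f); [solve_summableZ | solve_translation]
  | |- summableZ ?F => assumption
  end.

Lemma linf_bound (a : seqZ) : boundedZ a -> forall j, Rabs (a j) <= linf a.
Proof.
  intros [M HM] j; unfold linf.
  destruct (Lub_Rbar_correct (fun r => exists j : Z, r = Rabs (a j))) as [Hub Hlub].
  assert (H1 : Rbar_le (Rabs (a j)) (Lub_Rbar (fun r => exists j : Z, r = Rabs (a j))))
    by (apply Hub; exists j; auto).
  assert (H2 : Rbar_le (Lub_Rbar (fun r => exists j : Z, r = Rabs (a j))) M)
    by (apply Hlub; intros x [k ->]; simpl; auto).
  destruct (Lub_Rbar (fun r => exists j : Z, r = Rabs (a j))); simpl in *; tauto.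
Qed.

(** * Elementary inequalities *)

Lemma young (a b t : R) : 0 < t -> 2 * a * b <= t * a ^ 2 + b ^ 2 / t.
Proof.
  intros Ht.
  assert (0 <= t * (a - b / t) ^ 2) by (apply Rmult_le_pos; [lra | apply pow2_ge_0]).
  replace (t * a ^ 2 + b ^ 2 / t) with (2 * a * b + t * (a - b / t) ^ 2) by (field; lra).
  lra.
Qed.

Lemma pow2_le_of_Rabs_le (x M : R) : Rabs x <= M -> x ^ 2 <= M ^ 2.
Proof. intros H; rewrite <- (pow2_abs x); apply pow_incr; split; [apply Rabs_pos | exact H]. Qed.

Lemma mult3_le_of_Rabs_le (x y z a b c : R) :
  Rabs x <= a -> Rabs y <= b -> Rabs z <= c -> x * y * z <= a * b * c.
Proof.
  intros Hx Hy Hz; eapply Rle_trans; [apply Rle_abs|]; rewrite !Rabs_mult.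
  apply Rmult_le_compat; auto using Rabs_pos, Rmult_le_pos.
  apply Rmult_le_compat; auto using Rabs_pos.
Qed.

Lemma mult_le_mean_sq (d x y M : R) : Rabs d <= M -> - d * x * y <= M * (x ^ 2 + y ^ 2) / 2.
Proof.
  intros Hd; apply Rabs_le_between in Hd.
  assert (0 <= (M - d) * (x - y) ^ 2) by (apply Rmult_le_pos; [lra | apply pow2_ge_0]).
  assert (0 <= (M + d) * (x + y) ^ 2) by (apply Rmult_le_pos; [lra | apply pow2_ge_0]).
  nra.
Qed.

Lemma young_sigma (M X Y : R) (sigma : nat) : 0 <= M -> (sigma = 0%nat \/ sigma = 1%nat) ->
  2 * M * Rabs X * Rabs Y <= M ^ sigma * X ^ 2 + M ^ (2 - sigma) * Y ^ 2.
Proof.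
  intros HM [-> | ->]; rewrite <- (pow2_abs X), <- (pow2_abs Y);
    pose proof (Rabs_pos X); pose proof (Rabs_pos Y).
  - change (2 - 0)%nat with 2%nat; pose proof (pow2_ge_0 (Rabs X - M * Rabs Y)); nra.
  - change (2 - 1)%nat with 1%nat.
    assert (0 <= M * (Rabs X - Rabs Y) ^ 2) by (apply Rmult_le_pos; [lra | apply pow2_ge_0]).
    nra.
Qed.

Lemma Rabs_sq_sum_mult_diff_le (a b E : R) : Rabs a <= E -> Rabs b <= E ->
  Rabs ((a + b) ^ 2 * (a - b)) <= 4 / 3 * E * (a ^ 2 + b ^ 2).
Proof.
  intros Ha Hb.
  assert (Hsd : Rabs (a + b) + Rabs (a - b) <= 2 * E).
  { apply Rabs_le_between in Ha; apply Rabs_le_between in Hb.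
    destruct (Rcase_abs (a + b)), (Rcase_abs (a - b));
      rewrite ?(Rabs_left (a + b)), ?(Rabs_left (a - b)), ?(Rabs_right (a + b)),
        ?(Rabs_right (a - b)) by lra; lra. }
  replace (a ^ 2 + b ^ 2) with ((Rabs (a + b) ^ 2 + Rabs (a - b) ^ 2) / 2)
    by (rewrite !pow2_abs; field).
  rewrite Rabs_mult, <- RPow_abs.
  set (S := Rabs (a + b)) in *; set (D := Rabs (a - b)) in *.
  assert (0 <= S) by apply Rabs_pos; assert (0 <= D) by apply Rabs_pos.
  (* maximise [S^2 D] on the segment [S + D <= 2E]: the extremum is at [D = 2E/3] *)
  destruct (Rle_dec D (2 / 3 * E)).
  - assert (S ^ 2 * D <= S ^ 2 * (2 / 3 * E)) by (apply Rmult_le_compat_l; auto; apply pow2_ge_0).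
    pose proof (pow2_ge_0 D); nra.
  - assert (S ^ 2 <= (2 * E - D) ^ 2) by (apply pow_incr; lra).
    assert (S ^ 2 * (D - 2 / 3 * E) <= (2 * E - D) ^ 2 * (D - 2 / 3 * E))
      by (apply Rmult_le_compat_r; lra).
    assert (0 <= (2 * E - D) * (D - 2 / 3 * E) * (2 * E))
      by (apply Rmult_le_pos; [apply Rmult_le_pos|]; lra).
    pose proof (pow2_ge_0 (D - E)); nra.
Qed.

Lemma mult_quadratic_form_le (e0 g p q E : R) : Rabs e0 <= E ->
  - e0 * g * (p ^ 2 + p * q + q ^ 2) <= 9 / 2 * E ^ 2 * g ^ 2 + (p ^ 4 + q ^ 4) / 4.
Proof.
  intros He.
  assert (HQ : Rabs (p ^ 2 + p * q + q ^ 2) <= 3 / 2 * (p ^ 2 + q ^ 2)).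
  { pose proof (pow2_ge_0 (p + q)); pose proof (pow2_ge_0 (p - q)); apply Rabs_le; split; nra. }
  assert (H1 : - e0 * g * (p ^ 2 + p * q + q ^ 2) <= E * Rabs g * (3 / 2 * (p ^ 2 + q ^ 2))).
  { apply mult3_le_of_Rabs_le; auto; [rewrite Rabs_Ropp; auto | lra]. }
  pose proof (pow2_ge_0 (3 * E * Rabs g - (p ^ 2 + q ^ 2) / 2)).
  pose proof (pow2_ge_0 (p ^ 2 - q ^ 2)).
  rewrite <- (pow2_abs g); nra.
Qed.

Lemma sq_mean_mult_sq_mean_le (x y z : R) :
  ((x + y) / 2) ^ 2 * ((x + z) / 2) ^ 2 <= (2 * x ^ 4 + y ^ 4 + z ^ 4) / 4.
Proof.
  assert (Hmean : forall p q, (((p + q) / 2) ^ 2) ^ 2 <= (p ^ 4 + q ^ 4) / 2).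
  { intros p q; pose proof (pow2_ge_0 (p - q)); pose proof (pow2_ge_0 (p + q));
      pose proof (pow2_ge_0 (p ^ 2 - q ^ 2)); pose proof (pow2_ge_0 ((p - q) * (p + q))); nra. }
  pose proof (Hmean x y); pose proof (Hmean x z).
  pose proof (pow2_ge_0 (((x + y) / 2) ^ 2 - ((x + z) / 2) ^ 2)); nra.
Qed.

Lemma min_le_weighted (z X Y r : R) : 0 <= X -> 0 <= Y -> 0 < r -> z <= X -> z <= Y ->
  z <= r * X + Y / r.
Proof.
  intros HX HY Hr HzX HzY; destruct (Rle_dec 1 r).
  - assert (0 <= Y / r) by (apply Rdiv_le_0_compat; lra); nra.
  - assert (Y <= Y / r) by (apply Rmult_le_reg_r with r; [lra|]; field_simplify; nra).
    assert (0 <= r * X) by nra; lra.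
Qed.

(** * Summation by parts *)

Ltac normalize_index_step :=
  match goal with
  | |- context [ (?x + ?a + ?b)%Z ] =>
       let c := eval compute in (a + b)%Z in replace (x + a + b)%Z with (x + c)%Z by ring
  | |- context [ (?x + ?a - ?b)%Z ] =>
       let c := eval compute in (a - b)%Z in replace (x + a - b)%Z with (x + c)%Z by ring
  | |- context [ (?x - ?a + ?b)%Z ] =>
       let c := eval compute in (b - a)%Z in replace (x - a + b)%Z with (x + c)%Z by ring
  | |- context [ (?x - ?a - ?b)%Z ] =>
       let c := eval compute in (- a - b)%Z in replace (x - a - b)%Z with (x + c)%Z by ring
  | |- context [ (?x - ?a)%Z ] =>
       let c := eval compute in (- a)%Z in replace (x - a)%Z with (x + c)%Z by ring
  | |- context [ (?x + 0)%Z ] => replace (x + 0)%Z with x by ring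
  end.

(* Rewrites every grid index as [j + k] with a literal [k]. *)
Ltac normalize_indices := repeat normalize_index_step.

Ltac unfold_differences :=
  unfold Aop, D3, Dc, Dp, Dm in *; cbv beta; normalize_indices.

Section Summation_by_parts.

Variables (h : R) (e : seqZ).
Hypothesis Hh : 0 < h.
Hypothesis He : sq_summableZ e.

Lemma sumZ_mult_D3 (F : seqZ) : sq_summableZ F ->
  sumZ (fun j => D3 h e j * F j) = - sumZ (fun j => Dp h (Dm h e) j * Dm h F j).
Proof.
  intros HF; rewrite <- sumZ_opp.
  apply (sumZ_eq_telescope _ _ (fun j => Dp h (Dm h e) j * F (j - 1)%Z / h)); try solve_summableZ.
  intros j; unfold_differences; field; lra.
Qed.

Lemma sumZ_mult_D3_self :
  sumZ (fun j => e j * D3 h e j) = h / 2 * sumZ (fun j => Dp h (Dm h e) j ^ 2).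
Proof.
  rewrite <- sumZ_scal.
  apply (sumZ_eq_telescope _ _
    (fun j => e (j - 1)%Z * Dp h (Dm h e) j / h - Dm h e j ^ 2 / (2 * h))); try solve_summableZ.
  intros j; unfold_differences; field; lra.
Qed.

Lemma sumZ_D2_sq :
  sumZ (fun j => Dp h (Dm h e) j ^ 2) =
  sumZ (fun j => Dp h (Dc h e) j ^ 2) + h ^ 2 / 4 * sumZ (fun j => D3 h e j ^ 2).
Proof.
  rewrite <- sumZ_scal, <- sumZ_plus by solve_summableZ.
  apply (sumZ_eq_telescope _ _ (fun j => - Dp h (Dm h e) j ^ 2 / 2)); try solve_summableZ.
  intros j; unfold_differences; field; lra.
Qed.

Lemma sumZ_mult_D2_self :
  sumZ (fun j => e j * Dp h (Dm h e) j) = - sumZ (fun j => Dp h e j ^ 2).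
Proof.
  rewrite <- sumZ_opp.
  apply (sumZ_eq_telescope _ _ (fun j => e j * Dm h e j / h)); try solve_summableZ.
  intros j; unfold_differences; field; lra.
Qed.

Lemma sumZ_D3_mult_D2 :
  sumZ (fun j => D3 h e j * Dp h (Dm h e) j) = - (h / 2) * sumZ (fun j => D3 h e j ^ 2).
Proof.
  rewrite <- sumZ_scal.
  apply (sumZ_eq_telescope _ _ (fun j => Dp h (Dm h e) j ^ 2 / (2 * h))); try solve_summableZ.
  intros j; unfold_differences; field; lra.
Qed.

Lemma sumZ_mult_Dc_half_sq :
  sumZ (fun j => e j * Dc h (fun i => e i ^ 2 / 2) j) = - (h ^ 2 / 12) * sumZ (fun j => Dp h e j ^ 3).
Proof.
  rewrite <- sumZ_scal.
  apply (sumZ_eq_telescope _ _ (fun j => (e j ^ 3 / 3 + e j * e (j - 1)%Z ^ 2) / (4 * h)));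
    try solve_summableZ.
  intros j; unfold_differences; field; lra.
Qed.

Lemma sumZ_D2_sq_Dp_Dc :
  h ^ 2 / 4 * sumZ (fun j => Dp h (Dm h e) j ^ 2) =
  sumZ (fun j => Dp h e j ^ 2) - sumZ (fun j => Dc h e j ^ 2).
Proof.
  rewrite <- sumZ_scal, <- sumZ_minus by solve_summableZ.
  apply (sumZ_eq_telescope _ _ (fun j => - Dm h e j ^ 2 / 2)); try solve_summableZ.
  intros j; unfold_differences; field; lra.
Qed.

Lemma sumZ_Dc_mult_D2 (u : seqZ) : sq_summableZ u ->
  sumZ (fun j => Dc h (fun i => u i * e i) j * Dp h (Dm h e) j) =
  / h ^ 2 * (sumZ (fun j => - (Dp h u j * e j * e (j + 1)%Z))
             + sumZ (fun j => Dc h u j * e (j - 1)%Z * e (j + 1)%Z)).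
Proof.
  intros Hu; rewrite <- sumZ_plus, <- sumZ_scal by solve_summableZ.
  apply (sumZ_eq_telescope _ _ (fun j => (u j * e j ^ 2 + u (j - 1)%Z * e (j - 1)%Z ^ 2
      - 2 * u (j - 1)%Z * e (j - 1)%Z * e j) / (2 * h ^ 3))); try solve_summableZ.
  intros j; unfold_differences; field; lra.
Qed.

Lemma sumZ_Dc_half_sq_mult_D2 :
  sumZ (fun j => Dc h (fun i => e i ^ 2 / 2) j * Dp h (Dm h e) j) =
  1 / 6 * sumZ (fun j => Dp h e j ^ 3) - 2 / 3 * sumZ (fun j => Dc h e j ^ 3).
Proof.
  assert (Hcube_p : sumZ (fun j => Dp h e j * e j * e (j + 1)%Z) =
                    - (h ^ 2 / 3) * sumZ (fun j => Dp h e j ^ 3)).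
  { rewrite <- sumZ_scal.
    apply (sumZ_eq_telescope _ _ (fun j => e j ^ 3 / (3 * h))); try solve_summableZ.
    intros j; unfold_differences; field; lra. }
  assert (Hcube_c : sumZ (fun j => Dc h e j * e (j - 1)%Z * e (j + 1)%Z) =
                    - (4 * h ^ 2 / 3) * sumZ (fun j => Dc h e j ^ 3)).
  { rewrite <- sumZ_scal.
    apply (sumZ_eq_telescope _ _ (fun j => (e j ^ 3 + e (j - 1)%Z ^ 3) / (6 * h)));
      try solve_summableZ.
    intros j; unfold_differences; field; lra. }
  rewrite (sumZ_ext _ (fun j => Dc h (fun i => e i / 2 * e i) j * Dp h (Dm h e) j))
    by (intros j; unfold_differences; field; lra).
  rewrite sumZ_Dc_mult_D2 by solve_sq_summableZ.
  rewrite (sumZ_ext (fun j => - (Dp h (fun i => e i / 2) j * e j * e (j + 1)%Z))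
             (fun j => - / 2 * (Dp h e j * e j * e (j + 1)%Z)))
    by (intros j; unfold_differences; field; lra).
  rewrite (sumZ_ext (fun j => Dc h (fun i => e i / 2) j * e (j - 1)%Z * e (j + 1)%Z)
             (fun j => / 2 * (Dc h e j * e (j - 1)%Z * e (j + 1)%Z)))
    by (intros j; unfold_differences; field; lra).
  rewrite !sumZ_scal, Hcube_p, Hcube_c; field; lra.
Qed.

End Summation_by_parts.

(** * Estimates of the nonlinear terms *)

Lemma Rabs_Dc_le (h M : R) (a : seqZ) : 0 < h -> (forall j, Rabs (Dp h a j) <= M) ->
  forall j, Rabs (Dc h a j) <= M.
Proof.
  intros Hh H j.
  replace (Dc h a j) with ((Dp h a j + Dp h a (j - 1)%Z) / 2) by (unfold_differences; field; lra).
  pose proof (H j) as H0; pose proof (H (j - 1)%Z) as H1.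
  apply Rabs_le_between in H0; apply Rabs_le_between in H1; apply Rabs_le; lra.
Qed.

Lemma sumZ_mult_succ_le (d e : seqZ) (M : R) : sq_summableZ e -> (forall j, Rabs (d j) <= M) ->
  sumZ (fun j => d j * e j * e (j + 1)%Z) <= M * sumZ (fun j => e j ^ 2).
Proof.
  intros He Hd; assert (boundedZ d) by (exists M; auto).
  rewrite <- sumZ_scal.
  apply (sumZ_le_telescope _ _ (fun j => M * e j ^ 2 / 2)); try solve_summableZ.
  intros j; pose proof (mult_le_mean_sq (- d j) (e j) (e (j + 1)%Z) M).
  rewrite Rabs_Ropp in *; specialize (Hd j); lra.
Qed.

Lemma sumZ_mult_pred_succ_le (d e : seqZ) (M : R) : sq_summableZ e ->
  (forall j, Rabs (d j) <= M) ->
  sumZ (fun j => d j * e (j - 1)%Z * e (j + 1)%Z) <= M * sumZ (fun j => e j ^ 2).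
Proof.
  intros He Hd; assert (boundedZ d) by (exists M; auto).
  rewrite <- sumZ_scal.
  apply (sumZ_le_telescope _ _ (fun j => M * (e j ^ 2 - e (j - 1)%Z ^ 2) / 2)); try solve_summableZ.
  intros j; cbv beta; normalize_indices.
  pose proof (mult_le_mean_sq (- d j) (e (j + -1)%Z) (e (j + 1)%Z) M).
  rewrite Rabs_Ropp in *; specialize (Hd j); lra.
Qed.

Lemma Rabs_Dc_le_div (h M : R) (a : seqZ) : 0 < h -> (forall j, Rabs (a j) <= M) ->
  forall j, Rabs (Dc h a j) <= M / h.
Proof.
  intros Hh H j.
  replace (Dc h a j) with ((a (j + 1)%Z - a (j - 1)%Z) / 2 * / h) by (unfold_differences; field; lra).
  rewrite Rabs_mult, (Rabs_pos_eq (/ h)) by (left; apply Rinv_0_lt_compat; lra).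
  apply Rmult_le_compat_r; [left; apply Rinv_0_lt_compat; lra|].
  pose proof (H (j + 1)%Z) as H0; pose proof (H (j - 1)%Z) as H1.
  apply Rabs_le_between in H0; apply Rabs_le_between in H1; apply Rabs_le; lra.
Qed.

(* [Dc a] is bounded both by [Up] and by [U / h]; the weight [t]
   interpolates between the two bounds. *)
Lemma Dc_sq_le_interpolate (h t U Up : R) (a : seqZ) : 0 < h -> 0 < t ->
  (forall j, Rabs (a j) <= U) -> (forall j, Rabs (Dp h a j) <= Up) ->
  forall j, Dc h a j ^ 2 <= (U ^ 2 + t ^ 2 / h ^ 2 * Up ^ 2) / t.
Proof.
  intros Hh Ht HU HUp j.
  replace ((U ^ 2 + t ^ 2 / h ^ 2 * Up ^ 2) / t) with (h ^ 2 / t * (U / h) ^ 2 + Up ^ 2 / (h ^ 2 / t))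
    by (field; lra).
  apply min_le_weighted; try apply pow2_ge_0.
  - apply Rdiv_lt_0_compat; nra.
  - apply pow2_le_of_Rabs_le, Rabs_Dc_le_div; auto.
  - apply pow2_le_of_Rabs_le, (Rabs_Dc_le h Up a); auto.
Qed.

(* Pointwise form of the flux estimates below: [x, y] are [u (j+1), u (j-1)]
   and [a, b] are [e (j+1), e (j-1)]. *)
Lemma flux_quotient_sq_le (a b x y h U E Up K : R) : 0 < h ->
  Rabs x <= U -> Rabs y <= U -> Rabs a <= E -> Rabs b <= E ->
  Rabs ((x - y) / (2 * h)) <= Up -> ((x - y) / (2 * h)) ^ 2 <= K ->
  ((x * a - y * b + (a ^ 2 - b ^ 2) / 2) / (2 * h)) ^ 2 <=
  (U + E) ^ 2 * ((a - b) / (2 * h)) ^ 2 + (U * Up / h + 2 / 3 * Up * E / h + K) * (a ^ 2 + b ^ 2) / 2.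
Proof.
  intros Hh Hx Hy Ha Hb Hdu HK.
  set (ih := / h); assert (Hih : 0 < ih) by (apply Rinv_0_lt_compat; auto).
  set (D := (a - b) / (2 * h)); set (du := (x - y) / (2 * h)).
  set (m := (a + b) / 2); set (ub := (x + y) / 2).
  replace ((x * a - y * b + (a ^ 2 - b ^ 2) / 2) / (2 * h)) with ((ub + m) * D + m * du)
    by (unfold D, du, m, ub; field; lra).
  replace (((ub + m) * D + m * du) ^ 2) with
    ((ub + m) ^ 2 * D ^ 2 + 2 * ub * (m * D) * du + 2 * (m ^ 2 * D) * du + m ^ 2 * du ^ 2) by ring.
  apply Rabs_le_between in Hx; apply Rabs_le_between in Hy;
    apply Rabs_le_between in Ha; apply Rabs_le_between in Hb.
  assert (HT1 : (ub + m) ^ 2 * D ^ 2 <= (U + E) ^ 2 * D ^ 2).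
  { apply Rmult_le_compat_r; [apply pow2_ge_0|].
    apply pow2_le_of_Rabs_le; unfold ub, m; apply Rabs_le; lra. }
  assert (HmD : Rabs (m * D) <= (a ^ 2 + b ^ 2) * ih / 4).
  { replace (m * D) with ((a ^ 2 - b ^ 2) * ih / 4) by (unfold m, D, ih; field; lra).
    assert (0 <= a ^ 2 * ih) by (apply Rmult_le_pos; [apply pow2_ge_0 | lra]).
    assert (0 <= b ^ 2 * ih) by (apply Rmult_le_pos; [apply pow2_ge_0 | lra]).
    apply Rabs_le; split; lra. }
  assert (HT2 : ub * (m * D) * du <= U * ((a ^ 2 + b ^ 2) * ih / 4) * Up)
    by (apply mult3_le_of_Rabs_le; auto; unfold ub; apply Rabs_le; lra).
  assert (Hm2D : Rabs (m ^ 2 * D) <= 4 / 3 * E * (a ^ 2 + b ^ 2) * ih / 8).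
  { replace (m ^ 2 * D) with ((a + b) ^ 2 * (a - b) * (ih / 8)) by (unfold m, D, ih; field; lra).
    rewrite Rabs_mult, (Rabs_pos_eq (ih / 8)) by lra.
    replace (4 / 3 * E * (a ^ 2 + b ^ 2) * ih / 8) with (4 / 3 * E * (a ^ 2 + b ^ 2) * (ih / 8))
      by field.
    apply Rmult_le_compat_r; [lra|].
    apply Rabs_sq_sum_mult_diff_le; apply Rabs_le; lra. }
  assert (HT3 : 1 * (m ^ 2 * D) * du <= 1 * (4 / 3 * E * (a ^ 2 + b ^ 2) * ih / 8) * Up)
    by (apply mult3_le_of_Rabs_le; auto; rewrite Rabs_R1; lra).
  assert (HT4 : m ^ 2 * du ^ 2 <= (a ^ 2 + b ^ 2) / 2 * K).
  { apply Rmult_le_compat; auto; try apply pow2_ge_0.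
    unfold m; pose proof (pow2_ge_0 (a - b)); nra. }
  unfold ih in *; unfold Rdiv in *; nra.
Qed.

Lemma sq_mult_sub_le (x y a b U : R) : Rabs x <= U -> Rabs y <= U ->
  (x * a - y * b) ^ 2 <= 2 * U ^ 2 * (a ^ 2 + b ^ 2).
Proof.
  intros Hx Hy.
  assert (x ^ 2 * a ^ 2 <= U ^ 2 * a ^ 2)
    by (apply Rmult_le_compat_r; [apply pow2_ge_0 | apply pow2_le_of_Rabs_le; auto]).
  assert (y ^ 2 * b ^ 2 <= U ^ 2 * b ^ 2)
    by (apply Rmult_le_compat_r; [apply pow2_ge_0 | apply pow2_le_of_Rabs_le; auto]).
  pose proof (pow2_ge_0 (x * a + y * b)); nra.
Qed.

(* Pointwise form of the cross terms with the consistency error [ep]; [e0] is [e j]. *)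
Lemma flux_eps_pointwise_le (a b e0 x y ep h c U E : R) : 0 < h ->
  Rabs x <= U -> Rabs y <= U -> Rabs a <= E -> Rabs b <= E ->
  2 * ((x * a - y * b + (a ^ 2 - b ^ 2) / 2) / (2 * h)) * ep
  - c * h * ((a - 2 * e0 + b) / h ^ 2) * ep <=
  4 / h * ep ^ 2 + h * E ^ 2 * ((a - b) / (2 * h)) ^ 2 + (U ^ 2 + 2 * c ^ 2) / h * e0 ^ 2
  + (U ^ 2 + c ^ 2) / (2 * h) * (a ^ 2 - 2 * e0 ^ 2 + b ^ 2).
Proof.
  intros Hh Hx Hy Ha Hb.
  set (Wu := (x * a - y * b) / (2 * h)); set (D := (a - b) / (2 * h)); set (m := (a + b) / 2).
  set (q := - (c / 2) * ((a - 2 * e0 + b) / h)).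
  replace (2 * ((x * a - y * b + (a ^ 2 - b ^ 2) / 2) / (2 * h)) * ep
           - c * h * ((a - 2 * e0 + b) / h ^ 2) * ep)
    with (2 * Wu * ep + 2 * (m * D) * ep + 2 * q * ep) by (unfold Wu, D, m, q; field; lra).
  pose proof (young Wu ep h Hh); pose proof (young (m * D) ep h Hh).
  pose proof (young q ep (h / 2) ltac:(lra)).
  replace (ep ^ 2 / (h / 2)) with (2 / h * ep ^ 2) in * by (field; lra).
  assert (HWu : h * Wu ^ 2 <= U ^ 2 * (a ^ 2 + b ^ 2) / (2 * h)).
  { replace (h * Wu ^ 2) with ((x * a - y * b) ^ 2 / (4 * h)) by (unfold Wu; field; lra).
    replace (U ^ 2 * (a ^ 2 + b ^ 2) / (2 * h)) with (2 * U ^ 2 * (a ^ 2 + b ^ 2) / (4 * h))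
      by (field; lra).
    apply Rmult_le_compat_r; [left; apply Rinv_0_lt_compat; lra | apply sq_mult_sub_le; auto]. }
  apply Rabs_le_between in Ha; apply Rabs_le_between in Hb.
  assert (HmD : h * (m * D) ^ 2 <= h * E ^ 2 * D ^ 2).
  { replace (h * (m * D) ^ 2) with (h * D ^ 2 * m ^ 2) by ring.
    replace (h * E ^ 2 * D ^ 2) with (h * D ^ 2 * E ^ 2) by ring.
    apply Rmult_le_compat_l; [apply Rmult_le_pos; [lra | apply pow2_ge_0]|].
    apply pow2_le_of_Rabs_le; unfold m; apply Rabs_le; lra. }
  assert (Hqq : h / 2 * q ^ 2 <= c ^ 2 * (a ^ 2 + 2 * e0 ^ 2 + b ^ 2) / (2 * h)).
  { assert ((a - 2 * e0 + b) ^ 2 <= 4 * (a ^ 2 + 2 * e0 ^ 2 + b ^ 2)).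
    { pose proof (pow2_ge_0 (a - b)); pose proof (pow2_ge_0 (a + e0));
        pose proof (pow2_ge_0 (b + e0)); nra. }
    replace (h / 2 * q ^ 2) with (c ^ 2 * (a - 2 * e0 + b) ^ 2 / (8 * h)) by (unfold q; field; lra).
    replace (c ^ 2 * (a ^ 2 + 2 * e0 ^ 2 + b ^ 2) / (2 * h))
      with (c ^ 2 * (4 * (a ^ 2 + 2 * e0 ^ 2 + b ^ 2)) / (8 * h)) by (field; lra).
    apply Rmult_le_compat_r; [left; apply Rinv_0_lt_compat; lra|].
    apply Rmult_le_compat_l; auto; apply pow2_ge_0. }
  assert (U ^ 2 * (a ^ 2 + b ^ 2) / (2 * h) + c ^ 2 * (a ^ 2 + 2 * e0 ^ 2 + b ^ 2) / (2 * h) =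
     (U ^ 2 + 2 * c ^ 2) / h * e0 ^ 2 + (U ^ 2 + c ^ 2) / (2 * h) * (a ^ 2 - 2 * e0 ^ 2 + b ^ 2))
    by (field; lra).
  assert (ep ^ 2 / h + ep ^ 2 / h + 2 / h * ep ^ 2 = 4 / h * ep ^ 2) by (field; lra).
  lra.
Qed.

Definition nbr_mean (a : seqZ) : seqZ := fun j => (a (j + 1)%Z + a (j - 1)%Z) / 2.

(* By the discrete product rule, [Dc (u e + e^2/2) = flux_coef u e * Dc e + nbr_mean e * Dc u]. *)
Definition flux_coef (u e : seqZ) : seqZ := fun j => nbr_mean u j + nbr_mean e j.

(* The remainder of the product rule for [Dm (flux_coef u e * Dc e)]. *)
Definition psi (h : R) (e : seqZ) : seqZ :=
  fun j => Dc h e (j - 1)%Z * ((Dp h e j + Dp h e (j - 2)%Z) / 2).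

Lemma sq_summableZ_nbr_mean (a : seqZ) : sq_summableZ a -> sq_summableZ (nbr_mean a).
Proof. intros; unfold nbr_mean; solve_sq_summableZ. Qed.

Lemma sq_summableZ_flux_coef (u e : seqZ) : sq_summableZ u -> sq_summableZ e ->
  sq_summableZ (flux_coef u e).
Proof. intros; unfold flux_coef, nbr_mean; solve_sq_summableZ. Qed.

Lemma sq_summableZ_psi (h : R) (e : seqZ) : sq_summableZ e -> sq_summableZ (psi h e).
Proof. intros; unfold psi; solve_sq_summableZ. Qed.

#[export] Hint Resolve sq_summableZ_nbr_mean sq_summableZ_flux_coef sq_summableZ_psi : sq_summable.

Lemma sumZ_psi_sq_le (h : R) (e : seqZ) : 0 < h -> sq_summableZ e ->
  sumZ (fun j => psi h e j ^ 2) <= sumZ (fun j => Dp h e j ^ 4).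
Proof.
  intros Hh He.
  apply (sumZ_le_telescope _ _
    (fun j => - (3 * Dp h e (j - 1)%Z ^ 4 + 2 * Dp h e (j - 2)%Z ^ 4) / 4)); try solve_summableZ.
  intros j; unfold psi; cbv beta; normalize_indices.
  replace (Dc h e (j + -1)%Z * ((Dp h e j + Dp h e (j + -2)%Z) / 2)) with
    ((Dp h e (j + -2)%Z + Dp h e (j + -1)%Z) / 2 * ((Dp h e (j + -2)%Z + Dp h e j) / 2))
    by (unfold_differences; field; lra).
  rewrite Rpow_mult_distr.
  pose proof (sq_mean_mult_sq_mean_le (Dp h e (j + -2)%Z) (Dp h e (j + -1)%Z) (Dp h e j)); lra.
Qed.

Lemma sumZ_Dp_pow4_le (h E : R) (e : seqZ) : 0 < h -> sq_summableZ e ->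
  (forall j, Rabs (e j) <= E) ->
  sumZ (fun j => Dp h e j ^ 4) <= 9 * E ^ 2 * sumZ (fun j => Dp h (Dm h e) j ^ 2).
Proof.
  intros Hh He HE; rewrite <- sumZ_scal.
  apply (sumZ_le_telescope _ _
    (fun j => 2 * (Dp h e (j - 1)%Z ^ 3 * e j / h - Dp h e (j - 1)%Z ^ 4 / 4))); try solve_summableZ.
  intros j; cbv beta; normalize_indices.
  assert (Hexpand : Dp h e j ^ 4 =
    - e j * Dp h (Dm h e) j * (Dp h e j ^ 2 + Dp h e j * Dp h e (j + -1)%Z + Dp h e (j + -1)%Z ^ 2)
     + (Dp h e j ^ 3 * e (j + 1)%Z / h - Dp h e (j + -1)%Z ^ 3 * e j / h))
    by (unfold_differences; field; lra).
  pose proof (mult_quadratic_form_le (e j) (Dp h (Dm h e) j) (Dp h e j) (Dp h e (j + -1)%Z) E (HE j)).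
  lra.
Qed.

Lemma sumZ_h_Dc_cube_le (h E : R) (e : seqZ) : 0 < h -> sq_summableZ e ->
  (forall j, Rabs (e j) <= E) ->
  sumZ (fun j => h * Dc h e j ^ 3) <= E * sumZ (fun j => Dc h e j ^ 2).
Proof.
  intros Hh He HE; rewrite <- sumZ_scal; apply sumZ_le; try solve_summableZ.
  intros j; replace (h * Dc h e j ^ 3) with (h * Dc h e j * Dc h e j ^ 2) by ring.
  apply Rmult_le_compat_r; [apply pow2_ge_0|]; eapply Rle_trans; [apply Rle_abs|].
  replace (h * Dc h e j) with ((e (j + 1)%Z - e (j - 1)%Z) / 2) by (unfold_differences; field; lra).
  pose proof (HE (j + 1)%Z) as H0; pose proof (HE (j - 1)%Z) as H1.
  apply Rabs_le_between in H0; apply Rabs_le_between in H1; apply Rabs_le; lra.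
Qed.

Section Flux_estimates.

Variables (h U E Up Um : R) (u e : seqZ).
Hypothesis Hh : 0 < h.
Hypothesis Hu : sq_summableZ u.
Hypothesis He : sq_summableZ e.
Hypothesis HU : forall j, Rabs (u j) <= U.
Hypothesis HE : forall j, Rabs (e j) <= E.
Hypothesis HUp : forall j, Rabs (Dp h u j) <= Up.
Hypothesis HUm : forall j, Rabs (Dm h u j) <= Um.

(* [Dc (u e + e^2/2)] is the difference of the discrete Burgers fluxes of [u + e] and [u]. *)
Local Notation flux := (Dc h (fun i => u i * e i + e i ^ 2 / 2)).

Let Up_ge_0 : 0 <= Up.
Proof. eapply Rle_trans; [apply Rabs_pos | apply (HUp 0%Z)]. Qed.

Lemma sumZ_e_mult_Dc_le :
  sumZ (fun j => -2 * e j * Dc h (fun i => u i * e i) j) <= Up * sumZ (fun j => e j ^ 2).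
Proof.
  rewrite (sumZ_eq_telescope _ (fun j => - Dp h u j * e j * e (j + 1)%Z)
             (fun j => - u (j - 1)%Z * e (j - 1)%Z * e j / h)); try solve_summableZ.
  - apply sumZ_mult_succ_le; auto; intros j; rewrite Rabs_Ropp; auto.
  - intros j; unfold_differences; field; lra.
Qed.

Lemma sumZ_Dc_mult_D2_ge :
  - (2 * Up / h ^ 2) * sumZ (fun j => e j ^ 2) <=
  sumZ (fun j => Dc h (fun i => u i * e i) j * Dp h (Dm h e) j).
Proof.
  rewrite sumZ_Dc_mult_D2 by auto.
  pose proof (sumZ_mult_succ_le (Dp h u) e Up He HUp) as Hsucc.
  pose proof (sumZ_mult_pred_succ_le (fun j => - Dc h u j) e Up He
    (fun j => ltac:(cbv beta; rewrite Rabs_Ropp; apply (Rabs_Dc_le h Up u Hh HUp)))) as Hpred.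
  cbv beta in Hpred.
  rewrite (sumZ_ext (fun j => - (Dp h u j * e j * e (j + 1)%Z))
             (fun j => -1 * (Dp h u j * e j * e (j + 1)%Z))) by (intros; ring).
  rewrite (sumZ_ext (fun j => - Dc h u j * e (j - 1)%Z * e (j + 1)%Z)
             (fun j => -1 * (Dc h u j * e (j - 1)%Z * e (j + 1)%Z))) in Hpred by (intros; ring).
  rewrite sumZ_scal in *.
  replace (- (2 * Up / h ^ 2) * sumZ (fun j => e j ^ 2))
    with (/ h ^ 2 * (- (2 * Up) * sumZ (fun j => e j ^ 2))) by (field; lra).
  apply Rmult_le_compat_l; [left; apply Rinv_0_lt_compat; nra | lra].
Qed.

Lemma sumZ_flux_sq_le (K : R) : (forall j, Dc h u j ^ 2 <= K) ->
  sumZ (fun j => flux j ^ 2) <=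
  (U + E) ^ 2 * sumZ (fun j => Dc h e j ^ 2)
  + (U * Up / h + 2 / 3 * Up * E / h + K) * sumZ (fun j => e j ^ 2).
Proof.
  intros HK.
  rewrite <- !sumZ_scal, <- sumZ_plus by solve_summableZ.
  apply (sumZ_le_telescope _ _
    (fun j => (U * Up / h + 2 / 3 * Up * E / h + K) / 2 * (e j ^ 2 - e (j - 1)%Z ^ 2)));
    try solve_summableZ.
  intros j; cbv beta; normalize_indices.
  assert (Hdu : Dc h u j = (u (j + 1)%Z - u (j + -1)%Z) / (2 * h)) by (unfold_differences; field; lra).
  pose proof (flux_quotient_sq_le (e (j + 1)%Z) (e (j + -1)%Z) (u (j + 1)%Z) (u (j + -1)%Z) h U E Up K
    Hh (HU _) (HU _) (HE _) (HE _)
    ltac:(rewrite <- Hdu; apply (Rabs_Dc_le h Up u Hh HUp)) ltac:(rewrite <- Hdu; auto)).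
  replace (flux j) with ((u (j + 1)%Z * e (j + 1)%Z - u (j + -1)%Z * e (j + -1)%Z
                          + (e (j + 1)%Z ^ 2 - e (j + -1)%Z ^ 2) / 2) / (2 * h))
    by (unfold_differences; field; lra).
  replace (Dc h e j) with ((e (j + 1)%Z - e (j + -1)%Z) / (2 * h)) by (unfold_differences; field; lra).
  lra.
Qed.

Lemma sumZ_flux_mult_eps_le (c : R) (eps : seqZ) : sq_summableZ eps ->
  sumZ (fun j => 2 * flux j * eps j - c * h * Dp h (Dm h e) j * eps j) <=
  4 / h * sumZ (fun j => eps j ^ 2) + h * E ^ 2 * sumZ (fun j => Dc h e j ^ 2)
  + (U ^ 2 + 2 * c ^ 2) / h * sumZ (fun j => e j ^ 2).
Proof.
  intros Heps.
  rewrite <- !sumZ_scal, <- !sumZ_plus by solve_summableZ.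
  apply (sumZ_le_telescope _ _ (fun j => (U ^ 2 + c ^ 2) / (2 * h) * (e j ^ 2 - e (j - 1)%Z ^ 2)));
    try solve_summableZ.
  intros j; cbv beta; normalize_indices.
  pose proof (flux_eps_pointwise_le (e (j + 1)%Z) (e (j + -1)%Z) (e j) (u (j + 1)%Z) (u (j + -1)%Z)
    (eps j) h c U E Hh (HU _) (HU _) (HE _) (HE _)).
  replace (flux j) with ((u (j + 1)%Z * e (j + 1)%Z - u (j + -1)%Z * e (j + -1)%Z
                          + (e (j + 1)%Z ^ 2 - e (j + -1)%Z ^ 2) / 2) / (2 * h))
    by (unfold_differences; field; lra).
  replace (Dc h e j) with ((e (j + 1)%Z - e (j + -1)%Z) / (2 * h)) by (unfold_differences; field; lra).
  replace (Dp h (Dm h e) j) with ((e (j + 1)%Z - 2 * e j + e (j + -1)%Z) / h ^ 2)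
    by (unfold_differences; field; lra).
  lra.
Qed.

Lemma sumZ_D3_mult_mean_Dc_le (t : R) : 0 < t ->
  sumZ (fun j => 2 * D3 h e j * nbr_mean e j * Dc h u j) <=
  t * Up * sumZ (fun j => D3 h e j ^ 2) + Up / t * sumZ (fun j => e j ^ 2).
Proof.
  intros Ht; unfold nbr_mean.
  rewrite <- !sumZ_scal, <- sumZ_plus by solve_summableZ.
  apply (sumZ_le_telescope _ _ (fun j => Up / t / 2 * (e j ^ 2 - e (j - 1)%Z ^ 2)));
    try solve_summableZ.
  intros j; cbv beta; normalize_indices.
  set (k := D3 h e j); set (m := (e (j + 1)%Z + e (j + -1)%Z) / 2).
  assert (H1 : 2 * k * m * Dc h u j <= 2 * Rabs k * Rabs m * Up).
  { pose proof (Rabs_Dc_le h Up u Hh HUp) as HDc.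
    apply mult3_le_of_Rabs_le; auto using Rle_refl.
    rewrite Rabs_mult, (Rabs_pos_eq 2) by lra; lra. }
  assert (H2 : 2 * Rabs k * Rabs m <= t * k ^ 2 + m ^ 2 / t)
    by (rewrite <- (pow2_abs k), <- (pow2_abs m); apply young; auto).
  assert (H3 : m ^ 2 <= (e (j + 1)%Z ^ 2 + e (j + -1)%Z ^ 2) / 2)
    by (unfold m; pose proof (pow2_ge_0 (e (j + 1)%Z - e (j + -1)%Z)); nra).
  assert (H4 : 2 * Rabs k * Rabs m * Up <= (t * k ^ 2 + m ^ 2 / t) * Up)
    by (apply Rmult_le_compat_r; auto).
  assert (H5 : m ^ 2 / t * Up <= (e (j + 1)%Z ^ 2 + e (j + -1)%Z ^ 2) / 2 / t * Up).
  { apply Rmult_le_compat_r; auto.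
    apply Rmult_le_compat_r; [left; apply Rinv_0_lt_compat |]; lra. }
  assert ((e (j + 1)%Z ^ 2 + e (j + -1)%Z ^ 2) / 2 / t * Up =
          Up / t * e j ^ 2 + (Up / t / 2 * (e (j + 1)%Z ^ 2 - e j ^ 2)
                              - Up / t / 2 * (e j ^ 2 - e (j + -1)%Z ^ 2))) by (field; lra).
  lra.
Qed.

Lemma Rabs_flux_coef_le : forall j, Rabs (flux_coef u e j) <= U + E.
Proof.
  intros j; unfold flux_coef, nbr_mean.
  pose proof (HU (j + 1)%Z) as H0; pose proof (HU (j - 1)%Z) as H1;
    pose proof (HE (j + 1)%Z) as H2; pose proof (HE (j - 1)%Z) as H3.
  apply Rabs_le_between in H0; apply Rabs_le_between in H1;
    apply Rabs_le_between in H2; apply Rabs_le_between in H3.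
  apply Rabs_le; lra.
Qed.

Lemma flux_coef_succ_sub_le : forall j, flux_coef u e (j + 1)%Z - flux_coef u e j <= h * Um + 2 * E.
Proof.
  intros j.
  replace (flux_coef u e (j + 1)%Z - flux_coef u e j) with
    (h / 2 * (Dm h u (j + 2)%Z + Dm h u j) + (e (j + 2)%Z + e j - e (j + 1)%Z - e (j - 1)%Z) / 2)
    by (unfold flux_coef, nbr_mean; unfold_differences; field; lra).
  pose proof (HUm (j + 2)%Z) as H0; pose proof (HUm j) as H1.
  apply Rabs_le_between in H0; apply Rabs_le_between in H1.
  assert (Hm2 : h / 2 * Dm h u (j + 2)%Z <= h / 2 * Um) by (apply Rmult_le_compat_l; lra).
  assert (Hm0 : h / 2 * Dm h u j <= h / 2 * Um) by (apply Rmult_le_compat_l; lra).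
  pose proof (HE (j + 2)%Z) as H2; pose proof (HE j) as H3;
    pose proof (HE (j + 1)%Z) as H4; pose proof (HE (j - 1)%Z) as H5.
  apply Rabs_le_between in H2; apply Rabs_le_between in H3;
    apply Rabs_le_between in H4; apply Rabs_le_between in H5.
  lra.
Qed.

Lemma D2_mult_Dm_flux_coef_expand (j : Z) :
  -2 * (Dp h (Dm h e) j * Dm h (fun i => flux_coef u e i * Dc h e i) j) =
  -2 * flux_coef u e j * Dp h (Dc h e) (j - 1)%Z ^ 2
  - 1 / 2 * flux_coef u e j * (Dp h (Dm h e) j ^ 2 - Dp h (Dm h e) (j - 1)%Z ^ 2)
  - Dp h (Dm h e) j * Dc h e (j - 1)%Z * (Dp h u j + Dp h u (j - 2)%Z)
  - 2 * Dp h (Dm h e) j * psi h e j.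
Proof. unfold psi, flux_coef, nbr_mean; unfold_differences; field; lra. Qed.

Lemma sumZ_D2_mult_Dm_flux_coef_le (lam : R) (sigma : nat) : 0 < lam ->
  (sigma = 0%nat \/ sigma = 1%nat) ->
  sumZ (fun j => -2 * (Dp h (Dm h e) j * Dm h (fun i => flux_coef u e i * Dc h e i) j)) <=
  2 * (U + E) * sumZ (fun j => Dp h (Dc h e) j ^ 2)
  + (h / 2 * Um + E + lam + Up ^ sigma) * sumZ (fun j => Dp h (Dm h e) j ^ 2)
  + Up ^ (2 - sigma) * sumZ (fun j => Dp h e j ^ 2) + / lam * sumZ (fun j => psi h e j ^ 2).
Proof.
  intros Hl Hsig.
  rewrite <- !sumZ_scal, <- !sumZ_plus by solve_summableZ.
  apply (sumZ_le_telescope _ _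
    (fun j => -2 * (U + E) * Dp h (Dc h e) (j - 1)%Z ^ 2
              - 1 / 2 * flux_coef u e j * Dp h (Dm h e) (j - 1)%Z ^ 2
              + Up ^ (2 - sigma) * (- Dp h e (j - 1)%Z ^ 2 - Dp h e (j - 2)%Z ^ 2 / 2)));
    try solve_summableZ.
  intros j; cbv beta; rewrite D2_mult_Dm_flux_coef_expand; normalize_indices.
  set (G := Dp h (Dm h e) j); set (G1 := Dp h (Dm h e) (j + -1)%Z).
  set (Q := Dp h (Dc h e) (j + -1)%Z); set (D1 := Dc h e (j + -1)%Z).
  set (P1 := Dp h e (j + -1)%Z); set (P2 := Dp h e (j + -2)%Z).
  set (B := flux_coef u e j); set (B1 := flux_coef u e (j + 1)%Z).
  assert (HB := Rabs_flux_coef_le j); fold B in HB; apply Rabs_le_between in HB.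
  assert (HQ : -2 * B * Q ^ 2 <= 2 * (U + E) * Q ^ 2) by (pose proof (pow2_ge_0 Q); nra).
  (* the commutator term, after the shift [B G1^2 -> B1 G^2] *)
  assert (HG : 1 / 2 * G ^ 2 * (B1 - B) <= 1 / 2 * G ^ 2 * (h * Um + 2 * E)).
  { apply Rmult_le_compat_l; [pose proof (pow2_ge_0 G); lra|].
    pose proof (flux_coef_succ_sub_le j); unfold B1, B; normalize_indices; lra. }
  assert (HDu : - G * D1 * (Dp h u j + Dp h u (j + -2)%Z) <= Rabs G * Rabs D1 * (2 * Up)).
  { apply mult3_le_of_Rabs_le; try lra; [rewrite Rabs_Ropp; lra|].
    pose proof (HUp j); pose proof (HUp (j + -2)%Z).
    eapply Rle_trans; [apply Rabs_triang | lra]. }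
  pose proof (young_sigma Up G D1 sigma Up_ge_0 Hsig) as HY.
  assert (HD1 : D1 ^ 2 <= (P1 ^ 2 + P2 ^ 2) / 2).
  { replace D1 with ((P1 + P2) / 2) by (unfold D1, P1, P2; unfold_differences; field; lra).
    pose proof (pow2_ge_0 (P1 - P2)); nra. }
  assert (HUs : 0 <= Up ^ (2 - sigma)) by (apply pow_le; auto).
  assert (Up ^ (2 - sigma) * D1 ^ 2 <= Up ^ (2 - sigma) * ((P1 ^ 2 + P2 ^ 2) / 2))
    by (apply Rmult_le_compat_l; auto).
  pose proof (young (- G) (psi h e j) lam Hl) as Hpsi.
  replace ((- G) ^ 2) with (G ^ 2) in Hpsi by ring.
  assert (- 1 / 2 * B * (G ^ 2 - G1 ^ 2) = 1 / 2 * G ^ 2 * (B1 - B) - 1 / 2 * B1 * G ^ 2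
                                           + 1 / 2 * B * G1 ^ 2) by field.
  unfold Rdiv in *; lra.
Qed.

Lemma sumZ_D3_mult_flux_le (t lam : R) (sigma : nat) : 0 < t -> 0 < lam ->
  (sigma = 0%nat \/ sigma = 1%nat) ->
  sumZ (fun j => 2 * D3 h e j * flux j) <=
  2 * (U + E) * sumZ (fun j => Dp h (Dc h e) j ^ 2)
  + (h / 2 * Um + E + lam + Up ^ sigma) * sumZ (fun j => Dp h (Dm h e) j ^ 2)
  + Up ^ (2 - sigma) * sumZ (fun j => Dp h e j ^ 2) + / lam * sumZ (fun j => psi h e j ^ 2)
  + t * Up * sumZ (fun j => D3 h e j ^ 2) + Up / t * sumZ (fun j => e j ^ 2).
Proof.
  intros Ht Hl Hsig.
  rewrite (sumZ_ext _ (fun j => 2 * (D3 h e j * (flux_coef u e j * Dc h e j))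
                                + 2 * D3 h e j * nbr_mean e j * Dc h u j))
    by (intros j; unfold flux_coef, nbr_mean; unfold_differences; field; lra).
  rewrite sumZ_plus, sumZ_scal by solve_summableZ.
  rewrite (sumZ_mult_D3 h e Hh He (fun i => flux_coef u e i * Dc h e i)) by solve_sq_summableZ.
  pose proof (sumZ_D2_mult_Dm_flux_coef_le lam sigma Hl Hsig) as Hcoef.
  rewrite sumZ_scal in Hcoef.
  pose proof (sumZ_D3_mult_mean_Dc_le t Ht).
  lra.
Qed.

Lemma sumZ_e_mult_flux_D2_le (c : R) :
  sumZ (fun j => -2 * e j * (flux j - c * h / 2 * Dp h (Dm h e) j)) <=
  Up * sumZ (fun j => e j ^ 2) + h ^ 2 / 6 * sumZ (fun j => Dp h e j ^ 3)
  - c * h * sumZ (fun j => Dp h e j ^ 2).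
Proof.
  rewrite (sumZ_ext _ (fun j => -2 * e j * Dc h (fun i => u i * e i) j
      + (-2 * (e j * Dc h (fun i => e i ^ 2 / 2) j) + c * h * (e j * Dp h (Dm h e) j))))
    by (intros j; unfold_differences; field; lra).
  rewrite !sumZ_plus, !sumZ_scal by solve_summableZ.
  rewrite sumZ_mult_Dc_half_sq, sumZ_mult_D2_self by auto.
  pose proof sumZ_e_mult_Dc_le; lra.
Qed.

Lemma sumZ_D3_mult_flux_D2_le (c t lam : R) (sigma : nat) : 0 < t -> 0 < lam ->
  (sigma = 0%nat \/ sigma = 1%nat) ->
  sumZ (fun j => 2 * D3 h e j * (flux j - c * h / 2 * Dp h (Dm h e) j)) <=
  (Up ^ sigma + h / 2 * Um) * sumZ (fun j => Dp h (Dm h e) j ^ 2)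
  + 2 * (U + E + (lam + E + 9 * E ^ 2 / lam) / 2) * sumZ (fun j => Dp h (Dc h e) j ^ 2)
  + h ^ 2 / 2 * (c + (lam + E + 9 * E ^ 2 / lam) / 2) * sumZ (fun j => D3 h e j ^ 2)
  + Up ^ (2 - sigma) * sumZ (fun j => Dp h e j ^ 2)
  + t * Up * sumZ (fun j => D3 h e j ^ 2) + Up / t * sumZ (fun j => e j ^ 2).
Proof.
  intros Ht Hl Hsig.
  rewrite (sumZ_ext _ (fun j => 2 * D3 h e j * flux j + - (c * h) * (D3 h e j * Dp h (Dm h e) j)))
    by (intros j; field).
  rewrite sumZ_plus by solve_summableZ.
  rewrite sumZ_scal, sumZ_D3_mult_D2 by auto.
  pose proof (sumZ_D3_mult_flux_le t lam sigma Ht Hl Hsig).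
  assert (Hpsi : / lam * sumZ (fun j => psi h e j ^ 2)
                 <= / lam * (9 * E ^ 2 * sumZ (fun j => Dp h (Dm h e) j ^ 2))).
  { apply Rmult_le_compat_l; [left; apply Rinv_0_lt_compat; lra|].
    eapply Rle_trans; [apply sumZ_psi_sq_le | apply sumZ_Dp_pow4_le]; auto. }
  pose proof (sumZ_D2_sq h e Hh He) as HD2.
  unfold Rdiv in *; rewrite HD2 in *; lra.
Qed.

Lemma sumZ_flux_D2_eps_sq_le (c t : R) (eps : seqZ) : 0 <= c -> 0 < t -> sq_summableZ eps ->
  sumZ (fun j => (flux j - c * h / 2 * Dp h (Dm h e) j + eps j) ^ 2) <=
  ((U + E) ^ 2 + h * E ^ 2 - c ^ 2 + 2 / 3 * c * E) * sumZ (fun j => Dc h e j ^ 2)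
  + (U ^ 2 / t + t * Up ^ 2 / h ^ 2 + (Up * (U + 2 / 3 * E + 2 * c) + U ^ 2 + 2 * c ^ 2) / h)
    * sumZ (fun j => e j ^ 2)
  - c * h / 6 * sumZ (fun j => Dp h e j ^ 3) + c ^ 2 * sumZ (fun j => Dp h e j ^ 2)
  + (1 + 4 / h) * sumZ (fun j => eps j ^ 2).
Proof.
  intros Hc Ht Heps.
  rewrite (sumZ_ext _ (fun j => flux j ^ 2
      + (- (c * h) * (Dc h (fun i => u i * e i) j * Dp h (Dm h e) j)
      + (- (c * h) * (Dc h (fun i => e i ^ 2 / 2) j * Dp h (Dm h e) j)
      + (c ^ 2 * (h ^ 2 / 4 * Dp h (Dm h e) j ^ 2)
      + ((2 * flux j * eps j - c * h * Dp h (Dm h e) j * eps j) + eps j ^ 2))))))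
    by (intros j; unfold_differences; field; lra).
  rewrite !sumZ_plus by solve_summableZ.
  rewrite !sumZ_scal, sumZ_D2_sq_Dp_Dc, sumZ_Dc_half_sq_mult_D2 by auto.
  pose proof (sumZ_flux_sq_le _ (Dc_sq_le_interpolate h t U Up u Hh Ht HU HUp)).
  pose proof (sumZ_flux_mult_eps_le c eps Heps).
  assert (HDc : - (c * h) * sumZ (fun j => Dc h (fun i => u i * e i) j * Dp h (Dm h e) j)
                <= c * h * (2 * Up / h ^ 2) * sumZ (fun j => e j ^ 2)).
  { pose proof sumZ_Dc_mult_D2_ge.
    assert (0 <= c * h) by (apply Rmult_le_pos; lra); nra. }
  assert (Hcube : c * (h * sumZ (fun j => Dc h e j ^ 3)) <= c * (E * sumZ (fun j => Dc h e j ^ 2))).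
  { apply Rmult_le_compat_l; auto.
    rewrite <- sumZ_scal; apply sumZ_h_Dc_cube_le; auto. }
  set (S0 := sumZ (fun j => e j ^ 2)) in *.
  assert (c * h * (2 * Up / h ^ 2) * S0 = 2 * c * Up / h * S0) by (field; lra).
  assert ((U * Up / h + 2 / 3 * Up * E / h + (U ^ 2 + t ^ 2 / h ^ 2 * Up ^ 2) / t) * S0
          = (U ^ 2 / t + t * Up ^ 2 / h ^ 2 + Up * (U + 2 / 3 * E) / h) * S0) by (field; lra).
  lra.
Qed.

End Flux_estimates.

(** * The energy estimate *)

Lemma sumZ_mult_le_sq (a b : seqZ) : sq_summableZ a -> sq_summableZ b ->
  sumZ (fun j => -2 * a j * b j) <= sumZ (fun j => a j ^ 2) + sumZ (fun j => b j ^ 2).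
Proof.
  intros Ha Hb; rewrite <- sumZ_plus by solve_summableZ; apply sumZ_le; try solve_summableZ.
  intros j; pose proof (pow2_ge_0 (a j + b j)); nra.
Qed.

Lemma sumZ_Aop_sq (h t th : R) (e : seqZ) : 0 < h -> sq_summableZ e ->
  sumZ (fun j => Aop th t h e j ^ 2) =
  sumZ (fun j => Aop (- (1 - th)) t h e j ^ 2) + t * h * sumZ (fun j => Dp h (Dc h e) j ^ 2)
  + (t * h ^ 3 / 4 + t ^ 2 * (2 * th - 1)) * sumZ (fun j => D3 h e j ^ 2).
Proof.
  intros Hh He.
  rewrite (sumZ_ext _ (fun j => Aop (- (1 - th)) t h e j ^ 2
      + (2 * t * (e j * D3 h e j) + t ^ 2 * (2 * th - 1) * D3 h e j ^ 2)))
    by (intros j; unfold Aop; ring).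
  rewrite !sumZ_plus, !sumZ_scal by solve_summableZ.
  rewrite sumZ_mult_D3_self, sumZ_D2_sq by auto.
  field.
Qed.

Lemma sumZ_energy_step (h t c th U Up Um E lam : R) (sigma : nat) (e u eps : seqZ) :
  0 < h -> 0 < t -> 0 < c -> 0 <= th <= 1 -> 0 < lam ->
  sq_summableZ e -> sq_summableZ u -> sq_summableZ eps -> (sigma = 0%nat \/ sigma = 1%nat) ->
  (forall j, Rabs (u j) <= U) -> (forall j, Rabs (e j) <= E) ->
  (forall j, Rabs (Dp h u j) <= Up) -> (forall j, Rabs (Dm h u j) <= Um) ->
  sumZ (fun j => (Aop (- (1 - th)) t h e j
                  - t * (Dc h (fun i => u i * e i + e i ^ 2 / 2) j
                         - c * h / 2 * Dp h (Dm h e) j + eps j)) ^ 2)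
  <= sumZ (fun j => Aop th t h e j ^ 2)
   + t * (U ^ 2 + Up * (2 - th + t / h * (2 * c + 2 / 3 * E + 3 / 2 * U)) + t ^ 2 / h ^ 2 * Up ^ 2
          + t / h * (U ^ 2 + 2 * c ^ 2)) * sumZ (fun j => e j ^ 2)
   + t * sumZ (fun j => Aop (- (1 - th)) t h e j ^ 2)
   + t * sumZ (fun j => eps j ^ 2) * (1 + 4 * (t / h) + t)
   + t * sumZ (fun j => ((h / 6 * Dp h e j - c * 1) * (h - c * t)
                         + (1 - th) * t * Up ^ (2 - sigma) * 1) * Dp h e j ^ 2)
   + t ^ 2 * (E ^ 2 * (1 + h) + U ^ 2 - c ^ 2 + 2 * E * U + 2 * c / 3 * E)
     * sumZ (fun j => Dc h e j ^ 2)
   + t * ((1 - th) * t * (Up ^ sigma + h / 2 * Um)) * sumZ (fun j => Dp h (Dm h e) j ^ 2)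
   + t * (2 * (1 - th) * t * (U + E + (lam + E + 9 * E ^ 2 * / lam) / 2) - h)
     * sumZ (fun j => Dp h (Dc h e) j ^ 2)
   + t * (t * ((1 - 2 * th) + (1 - th) * h ^ 2 / 2 * (c + (lam + E + 9 * E ^ 2 * / lam) / 2)
               + t * (1 - th) * Up) - h ^ 3 / 4)
     * sumZ (fun j => D3 h e j ^ 2).
Proof.
  intros Hh Ht Hc Hth Hl He Hu Heps Hsig HU HE HUp HUm.
  set (a := Aop (- (1 - th)) t h e).
  set (s := (1 - th) * t).
  set (F := fun j => Dc h (fun i => u i * e i + e i ^ 2 / 2) j - c * h / 2 * Dp h (Dm h e) j).
  rewrite (sumZ_ext _ (fun j => a j ^ 2 + (t * (-2 * a j * eps j) + (t * (-2 * e j * F j)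
                                + (t * s * (2 * D3 h e j * F j) + t ^ 2 * (F j + eps j) ^ 2)))))
    by (intros j; unfold a, s, F, Aop; ring).
  assert (Ha : sq_summableZ a) by (unfold a; solve_sq_summableZ).
  unfold F; rewrite !sumZ_plus, !sumZ_scal by solve_summableZ.
  pose proof (sumZ_mult_le_sq a eps Ha Heps) as Hcross.
  pose proof (sumZ_e_mult_flux_D2_le h Up u e Hh Hu He HUp c) as HA.
  pose proof (sumZ_D3_mult_flux_D2_le h U E Up Um u e Hh Hu He HU HE HUp HUm c t lam sigma
                Ht Hl Hsig) as HB.
  pose proof (sumZ_flux_D2_eps_sq_le h U E Up u e Hh Hu He HU HE HUp c t eps
                ltac:(lra) Ht Heps) as HC.
  rewrite (sumZ_ext (fun j => ((h / 6 * Dp h e j - c * 1) * (h - c * t)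
                               + s * Up ^ (2 - sigma) * 1) * Dp h e j ^ 2)
             (fun j => h / 6 * (h - c * t) * Dp h e j ^ 3
                       + (- (c * (h - c * t)) * Dp h e j ^ 2 + s * Up ^ (2 - sigma) * Dp h e j ^ 2)))
    by (intros j; ring).
  rewrite !sumZ_plus, !sumZ_scal by solve_summableZ.
  rewrite sumZ_Aop_sq by auto; fold a.
  apply (Rmult_le_compat_l t) in Hcross, HA; try lra.
  apply (Rmult_le_compat_l (t * s)) in HB; [|unfold s; nra].
  apply (Rmult_le_compat_l (t ^ 2)) in HC; [|nra].
  set (S0 := sumZ (fun j => e j ^ 2)) in *.
  assert (t * s * (Up / t * S0) = (1 - th) * t * Up * S0) by (unfold s; field; lra).
  assert (t ^ 2 * (U ^ 2 / t * S0) = t * U ^ 2 * S0) by (field; lra).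
  (* [Aa] carries [3/2 U] where [U] suffices: the excess is this nonnegative slack *)
  assert (0 <= t * (t / h) * Up * U * S0).
  { assert (0 <= Up) by (eapply Rle_trans; [apply Rabs_pos | apply (HUp 0%Z)]).
    assert (0 <= U) by (eapply Rle_trans; [apply Rabs_pos | apply (HU 0%Z)]).
    assert (0 <= S0) by (apply sumZ_ge_0; [solve_summableZ | intros; apply pow2_ge_0]).
    assert (0 <= t / h) by (apply Rdiv_le_0_compat; lra).
    repeat (apply Rmult_le_pos; auto); lra. }
  unfold s in *; lra.
Qed.

Lemma normD_sq (h : R) (a : seqZ) : 0 <= h -> sq_summableZ a ->
  normD h a ^ 2 = h * sumZ (fun j => a j ^ 2).
Proof.
  intros Hh Ha; unfold normD, ipD.
  rewrite (sumZ_ext (fun j => a j * a j) (fun j => a j ^ 2)) by (intros; ring).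
  apply pow2_sqrt, Rmult_le_pos; auto.
  apply sumZ_ge_0; auto; intros; apply pow2_ge_0.
Qed.

Lemma error_equation (c theta dt dx : R) (v ua : nat -> seqZ) (n : nat) :
  0 < dt -> 0 < dx ->
  (forall j, (v (S n) j - v n j) / dt + Dc dx (fun k => v n k ^ 2 / 2) j
             + theta * D3 dx (v (S n)) j + (1 - theta) * D3 dx (v n) j
             = c * dx / 2 * Dp dx (Dm dx (v n)) j) ->
  forall j, Aop theta dt dx (err v ua (S n)) j =
    Aop (- (1 - theta)) dt dx (err v ua n) j
    - dt * (Dc dx (fun i => ua n i * err v ua n i + err v ua n i ^ 2 / 2) j
            - c * dx / 2 * Dp dx (Dm dx (err v ua n)) j + cons_err c theta dt dx ua n j).
Proof.
  intros Hdt Hdx Hscheme j; specialize (Hscheme j).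
  unfold cons_err, err; revert Hscheme; unfold_differences; intros Hscheme.
  (* the goal is [dt] times the scheme equation, rearranged *)
  match goal with |- ?L = ?R => match type of Hscheme with ?SL = ?SR =>
    replace L with (R + dt * (SL - SR)) by (field; lra) end end.
  rewrite Hscheme; ring.
Qed.
Theorem proposition2
  (u0 : R -> R) (u : R -> R -> R) (T c : R)
  (HT : 0 < T) (Hc : 0 < c)
  (Hsol : KdV_solution u0 T u) :
  forall (theta dt dx : R) (v : nat -> seqZ) (n : nat) (gamma : R) (sigma : nat),
  0 <= theta <= 1 -> 0 < dt -> 0 < dx ->
  (forall m : nat, l2Z (uavg u0 u T dt dx m)) ->
  scheme_solution c theta dt dx u0 v ->
  (n < Nsteps T dt)%nat ->
  0 <= gamma < 1 / 2 ->
  (sigma = 0%nat \/ sigma = 1%nat) ->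
  let ua := uavg u0 u T dt dx in
  let e := err v ua in
  let eps := cons_err c theta dt dx ua in
  let U := linf (ua n) in
  let Up := linf (Dp dx (ua n)) in
  let Um := linf (Dm dx (ua n)) in
  let E := linf (e n) in
  let X := Rpower dx (1 / 2 - gamma) + E + 9 * E ^ 2 * Rpower dx (gamma - 1 / 2) in
  let Aa := U ^ 2 + Up * (2 - theta + dt / dx * (2 * c + 2 / 3 * E + 3 / 2 * U))
            + dt ^ 2 / dx ^ 2 * Up ^ 2 + dt / dx * (U ^ 2 + 2 * c ^ 2) in
  let Ab : seqZ := fun j => (dx / 6 * Dp dx (e n) j - c * 1) * (dx - c * dt)
            + (1 - theta) * dt * Up ^ (2 - sigma) * 1 in
  let Ac := E ^ 2 * (1 + dx) + U ^ 2 - c ^ 2 + 2 * E * U + 2 * c / 3 * E in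
  let Ad := (1 - theta) * dt * (Up ^ sigma + dx / 2 * Um) in
  let Ae := 2 * (1 - theta) * dt * (U + E + X / 2) - dx in
  let Af := dt * ((1 - 2 * theta) + (1 - theta) * dx ^ 2 / 2 * (c + X / 2)
                  + dt * (1 - theta) * Up) - dx ^ 3 / 4 in
  normD dx (Aop theta dt dx (e (S n))) ^ 2 <=
    normD dx (Aop theta dt dx (e n)) ^ 2
    + dt * Aa * normD dx (e n) ^ 2
    + dt * normD dx (Aop (- (1 - theta)) dt dx (e n)) ^ 2
    + dt * normD dx (eps n) ^ 2 * (1 + 4 * (dt / dx) + dt)
    + dt * ipD dx Ab (sqZ (Dp dx (e n)))
    + dt ^ 2 * Ac * normD dx (Dc dx (e n)) ^ 2
    + dt * Ad * normD dx (Dp dx (Dm dx (e n))) ^ 2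
    + dt * Ae * normD dx (Dp dx (Dc dx (e n))) ^ 2
    + dt * Af * normD dx (D3 dx (e n)) ^ 2.
Proof.
  intros theta dt dx v n gamma sigma Hth Hdt Hdx Hua Hsch _ Hgam Hsig
         ua e eps U Up Um E X Aa Ab Ac Ad Ae Af.
  destruct Hsch as [_ [Hv Hscheme]].
  assert (Hu : forall m, sq_summableZ (ua m)) by (intros; apply sq_summableZ_of_l2Z, Hua).
  assert (Hv' : forall m, sq_summableZ (v m)) by (intros; apply sq_summableZ_of_l2Z, Hv).
  clearbody ua.
  pose proof (Hu n); pose proof (Hv' n); pose proof (Hv' (S n)); pose proof (Hu (S n)).
  assert (He : sq_summableZ (e n)) by (unfold e, err; solve_sq_summableZ).
  assert (He1 : sq_summableZ (e (S n))) by (unfold e, err; solve_sq_summableZ).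
  assert (Heps : sq_summableZ (eps n)) by (unfold eps, cons_err; solve_sq_summableZ).
  assert (HU : forall j, Rabs (ua n j) <= U) by (apply linf_bound; solve_boundedZ).
  assert (HUp : forall j, Rabs (Dp dx (ua n) j) <= Up) by (apply linf_bound; solve_boundedZ).
  assert (HUm : forall j, Rabs (Dm dx (ua n) j) <= Um) by (apply linf_bound; solve_boundedZ).
  assert (HE : forall j, Rabs (e n j) <= E) by (apply linf_bound; solve_boundedZ).
  set (lam := Rpower dx (1 / 2 - gamma)) in X.
  assert (Hlam : 0 < lam) by apply exp_pos.
  assert (Hlam_inv : Rpower dx (gamma - 1 / 2) = / lam)
    by (unfold lam; rewrite <- Rpower_Ropp; f_equal; ring).
  pose proof (sumZ_energy_step dx dt c theta U Up Um E lam sigma (e n) (ua n) (eps n)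
    Hdx Hdt Hc Hth Hlam He (Hu n) Heps Hsig HU HE HUp HUm) as Hstep.
  rewrite (sumZ_ext _ (fun j => Aop theta dt dx (e (S n)) j ^ 2)) in Hstep
    by (intros j; rewrite (error_equation c theta dt dx v ua n Hdt Hdx (Hscheme n)); reflexivity).
  apply (Rmult_le_compat_l dx) in Hstep; [|lra].
  rewrite !normD_sq by (lra || solve_sq_summableZ).
  unfold ipD, sqZ, Aa, Ab, Ac, Ad, Ae, Af, X; rewrite Hlam_inv.
  lra.
Qed.
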